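(* Let $\varepsilon>0$, $d>0$ and $u_0\oplus v_0\in U\oplus U$. Let $u\oplus v$ be the mild solution on $X_\infty$ (with $\boldsymbol L_\bullet=\boldsymbol L$) with initial datum $u_0\oplus v_0$, defined on its maximal interval of existence $[0,\tau_{\max})$, and let $0<\tau<\tau_{\max}$. For $M\ge N$ let $u^{(M)}\oplus v^{(M)}$ be the mild solution on $X_M$ (with $\boldsymbol L_\bullet=\boldsymbol L_M$ and nonlinearity $f(u^{(M)},v^{(M)})$, $g(u^{(M)},v^{(M)})$, which lie in $X_M$) with initial datum $\boldsymbol P_Mu_0\oplus\boldsymbol P_Mv_0$. Then for all sufficiently large $M$, $u^{(M)}\oplus v^{(M)}$ exists on $[0,\tau]$, and $$\lim_{M\to\infty}\sup_{0\le t\le\tau}\|u^{(M)}(t)\oplus v^{(M)}(t)-u(t)\oplus v(t)\|=0.$$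
   Context: Let $p$ be a prime and $N\ge1$. Let $G_N^0$ be a nonempty finite set of $p$-adic integers $I=I_0+\dots+I_{N-1}p^{N-1}$ (digits in $\{0,\dots,p-1\}$), the vertex set of a graph with adjacency matrix $[A_{JI}]$, $A_{JI}\in\{0,1\}$. $\Omega(p^{r}|x-a|_p)$ is the characteristic function of $\{x:|x-a|_p\le p^{-r}\}$; $dx$ is Haar measure on $\mathbb Q_p$ with $\int_{\mathbb Z_p}dx=1$. $\mathcal K_N=\bigsqcup_I(I+p^N\mathbb Z_p)$, $J_N(x,y)=p^N\sum_{J,K}A_{JK}\Omega(p^N|x-J|_p)\Omega(p^N|y-K|_p)$, $X_\infty=C(\mathcal K_N,\mathbb R)$ with sup norm, $\boldsymbol L\varphi(x)=\int_{\mathcal K_N}(\varphi(y)-\varphi(x))J_N(x,y)dy$. For $M\ge N$ and $I\in G_N^0$, $G_I^M$ is a fixed set of representatives of the cosets of $p^M\mathbb Z_p$ in $I+p^N\mathbb Z_p$, $G_N^M=\bigsqcup_IG_I^M$, $X_M\subset X_\infty$ is the real span of $\{\Omega(p^M|x-R|_p)\}_{R\in G_N^M}$, $\boldsymbol L_M=\boldsymbol L|_{X_M}$, and $\boldsymbol P_M\varphi(x)=\sum_{R\in G_N^M}\varphi(R)\Omega(p^M|x-R|_p)$. Hypothesis 1: real $a<b$, $f,g\in C^1((a,b)^2)$ real-valued with $\nabla f\neq0$, $\nabla g\neq0$ on $(a,b)^2$. $U=\{w\in X_\infty:a<w(x)<b\ \forall x\}$; $f(u,v)$ means $x\mapsto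 f(u(x),v(x))$. Norm on $X_\bullet\oplus X_\bullet$: $\|u\oplus v\|=\max(\|u\|_\infty,\|v\|_\infty)$. For $X_\bullet\in\{X_\infty,X_M\}$ with operator $\boldsymbol L_\bullet\in\{\boldsymbol L,\boldsymbol L_M\}$, a mild solution on $[0,\tau_0)$ is $u\oplus v\in C([0,\tau_0),(U\cap X_\bullet)\oplus(U\cap X_\bullet))$ with $u(t)=e^{\varepsilon t\boldsymbol L_\bullet}u(0)+\int_0^te^{\varepsilon(t-s)\boldsymbol L_\bullet}f(u(s),v(s))ds$ and $v(t)=e^{\varepsilon dt\boldsymbol L_\bullet}v(0)+\int_0^te^{\varepsilon d(t-s)\boldsymbol L_\bullet}g(u(s),v(s))ds$. Mild solutions are unique; the maximal interval of existence $[0,\tau_{\max})$ is the union of all intervals $[0,\tau_0)$ on which a mild solution with the given initial datum exists. *)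

From Stdlib Require Import Reals Lra Lia ZArith Znumtheory List ClassicalEpsilon.
Open Scope R_scope.

(* p-adic integers are represented by their digit sequences x : nat -> nat
   (x i = i-th p-adic digit); validity (digits < p) is a predicate. *)
Definition digseq := nat -> nat.

Definition valid (p : nat) (x : digseq) : Prop := forall i, (x i < p)%nat.

Fixpoint trunc (p M : nat) (x : digseq) : nat :=
  match M with
  | O => O
  | S m => (trunc p m x + x m * p ^ m)%nat
  end.

(* the p-adic integer with finite expansion the base-p digits of c *)
Definition digits (p c : nat) : digseq := fun i => ((c / p ^ i) mod p)%nat.

Definition inG0b (G0 : list nat) (n : nat) : bool := existsb (Nat.eqb n) G0.

(* x in K_N = disjoint union of I + p^N Z_p, I in G0 *)
Definition inK (p N : nat) (G0 : list nat) (x : digseq) : Prop :=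
  valid p x /\ In (trunc p N x) G0.

(* Omega(p^M |x - a|_p) for p-adic integers x, a *)
Definition Omega (p M : nat) (x a : digseq) : R :=
  if Nat.eqb (trunc p M x) (trunc p M a) then 1 else 0.

Fixpoint sumR (n : nat) (F : nat -> R) : R :=
  match n with O => 0 | S m => sumR m F + F m end.

Definition sumL (l : list nat) (F : nat -> R) : R :=
  fold_right (fun k acc => F k + acc) 0 l.

Definition Lim (w : nat -> R) : R := epsilon (inhabits 0) (fun l => Un_cv w l).

(* Haar integral over K_N (normalised so that Z_p has measure 1), as the limit
   of Riemann sums over the balls of radius p^-M *)
Definition haarK (p N : nat) (G0 : list nat) (psi : digseq -> R) : R :=
  Lim (fun M => sumR (p ^ M) (fun c =>
        if inG0b G0 (trunc p N (digits p c))
        then psi (digits p c) / INR (p ^ M) else 0)).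

Definition JN (p N : nat) (G0 : list nat) (A : nat -> nat -> R) (x y : digseq) : R :=
  INR (p ^ N) * sumL G0 (fun J => sumL G0 (fun K =>
     A J K * Omega p N x (digits p J) * Omega p N y (digits p K))).

Definition Lop (p N : nat) (G0 : list nat) (A : nat -> nat -> R)
  (phi : digseq -> R) (x : digseq) : R :=
  haarK p N G0 (fun y => (phi y - phi x) * JN p N G0 A x y).

(* e^{tL} phi = sum_k t^k L^k phi / k!  (L is bounded) *)
Definition expL (p N : nat) (G0 : list nat) (A : nat -> nat -> R) (t : R)
  (phi : digseq -> R) (x : digseq) : R :=
  Lim (fun n => sum_f_R0 (fun k => t ^ k / INR (fact k) *
                                   Nat.iter k (Lop p N G0 A) phi x) n).

Definition RInt (h : R -> R) (a0 b0 : R) : R :=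
  Lim (fun n => sumR n (fun k => h (a0 + (b0 - a0) * INR k / INR n) * ((b0 - a0) / INR n))).

(* phi restricted to K_N is continuous (p-adic topology) : phi in X_infty *)
Definition inXinf (p N : nat) (G0 : list nat) (phi : digseq -> R) : Prop :=
  forall x, inK p N G0 x -> forall e, 0 < e -> exists m : nat,
    forall y, inK p N G0 y -> trunc p m y = trunc p m x -> Rabs (phi y - phi x) < e.

(* G_N^M is indexed by c < p^M with c mod p^N in G0; its representative is rep M c *)
Definition inXM (p N : nat) (G0 : list nat) (rep : nat -> nat -> digseq) (M : nat)
  (phi : digseq -> R) : Prop :=
  exists coef : nat -> R, forall x, inK p N G0 x ->
    phi x = sumR (p ^ M) (fun c => if inG0b G0 (trunc p N (digits p c))
                                   then coef c * Omega p M x (rep M c) else 0).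

Definition PM (p N : nat) (G0 : list nat) (rep : nat -> nat -> digseq) (M : nat)
  (phi : digseq -> R) (x : digseq) : R :=
  sumR (p ^ M) (fun c => if inG0b G0 (trunc p N (digits p c))
                         then phi (rep M c) * Omega p M x (rep M c) else 0).

Definition inU (p N : nat) (G0 : list nat) (a b : R) (phi : digseq -> R) : Prop :=
  forall x, inK p N G0 x -> a < phi x < b.

Definition contS (p N : nat) (G0 : list nat) (tau0 : R) (u : R -> digseq -> R) : Prop :=
  forall t, 0 <= t < tau0 -> forall e, 0 < e -> exists del, 0 < del /\
    forall s, 0 <= s < tau0 -> Rabs (s - t) < del ->
      forall x, inK p N G0 x -> Rabs (u s x - u t x) < e.

(* mild solution on [0,tau0) in the space described by InX (X_infty or X_M);
   the equalities are in X, i.e. pointwise on K_N. *)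
Definition mild (p N : nat) (G0 : list nat) (A : nat -> nat -> R) (a b : R)
  (f g : R -> R -> R) (eps d : R) (InX : (digseq -> R) -> Prop) (tau0 : R)
  (u0 v0 : digseq -> R) (u v : R -> digseq -> R) : Prop :=
  (forall t, 0 <= t < tau0 ->
     InX (u t) /\ InX (v t) /\ inU p N G0 a b (u t) /\ inU p N G0 a b (v t)) /\
  contS p N G0 tau0 u /\ contS p N G0 tau0 v /\
  (forall t, 0 <= t < tau0 -> forall x, inK p N G0 x ->
     u t x = expL p N G0 A (eps * t) u0 x
             + RInt (fun s => expL p N G0 A (eps * (t - s))
                                (fun y => f (u s y) (v s y)) x) 0 t /\
     v t x = expL p N G0 A (eps * d * t) v0 x
             + RInt (fun s => expL p N G0 A (eps * d * (t - s))
                                (fun y => g (u s y) (v s y)) x) 0 t).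

Definition cont2 (F : R -> R -> R) (x y : R) : Prop :=
  forall e, 0 < e -> exists del, 0 < del /\ forall x' y',
    Rabs (x' - x) < del -> Rabs (y' - y) < del -> Rabs (F x' y' - F x y) < e.

Definition C1_grad_nz (a b : R) (f : R -> R -> R) : Prop :=
  exists fx fy : R -> R -> R,
    forall x y, a < x < b -> a < y < b ->
      derivable_pt_lim (fun s => f s y) x (fx x y) /\
      derivable_pt_lim (fun s => f x s) y (fy x y) /\
      cont2 fx x y /\ cont2 fy x y /\
      (fx x y <> 0 \/ fy x y <> 0).

From Stdlib Require Import Reals Lra Lia ZArith Znumtheory List ClassicalEpsilon Classical FunctionalExtensionality.
Open Scope R_scope.

(* The operator L on X_infty = C(K_N) is bounded, so e^{tL} is its exponential series and
   mild solutions are exactly the fixed points of the Duhamel maps.  L leaves invariant each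
   space X_M of functions constant on the balls of radius p^-M, and L_M is its restriction,
   so the discrete problem is the same fixed-point problem with data P_M u0, P_M v0, solved
   among level-M locally constant functions. *)

Ltac solve_nonneg := repeat (match goal with |- 0 <= ?a * ?b => apply Rmult_le_pos end); try lra.

Ltac solve_nonneg_sum := repeat (match goal with |- 0 <= ?a * ?b => apply Rmult_le_pos | |- 0 <= ?a + ?b => apply Rplus_le_le_0_compat end); try lra.

(* A p-adic integer is its digit sequence; trunc p M x is the
   residue of x modulo p^M, and the ball of radius p^-M around x is the set of
   y with trunc p M y = trunc p M x. *)
Lemma trunc_digits p M c : (p <> 0)%nat -> trunc p M (digits p c) = (c mod p ^ M)%nat.
Proof.
  intros Hp. induction M as [|M IH].
  - rewrite Nat.pow_0_r, Nat.mod_1_r. reflexivity.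
  - simpl. rewrite IH. unfold digits. rewrite (Nat.mul_comm p (p ^ M)).
    rewrite Nat.Div0.mod_mul_r. lia.
Qed.

Lemma trunc_lt p M x : valid p x -> (trunc p M x < p ^ M)%nat.
Proof.
  intros Hv. induction M as [|M IH]; simpl; [lia|].
  specialize (Hv M).
  assert (x M * p ^ M <= (p - 1) * p ^ M)%nat by (apply Nat.mul_le_mono_r; lia).
  assert ((p - 1) * p ^ M + p ^ M = p * p ^ M)%nat.
  { destruct p; [lia|]. simpl. rewrite Nat.sub_0_r. lia. }
  lia.
Qed.

Lemma trunc_mod p m M x : valid p x -> (m <= M)%nat -> (p <> 0)%nat ->
  (trunc p M x mod p ^ m = trunc p m x)%nat.
Proof.
  intros Hv Hle Hp. induction Hle as [|M Hle IH].
  - apply Nat.mod_small. apply trunc_lt; auto.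
  - simpl. replace (p ^ M)%nat with (p ^ (M - m) * p ^ m)%nat.
    + rewrite Nat.mul_assoc, Nat.Div0.mod_add. exact IH.
    + rewrite <- Nat.pow_add_r. f_equal. lia.
Qed.

Lemma trunc_eq_le p m M x y : valid p x -> valid p y -> (m <= M)%nat -> (p <> 0)%nat ->
  trunc p M x = trunc p M y -> trunc p m x = trunc p m y.
Proof.
  intros Hx Hy Hle Hp H. rewrite <- (trunc_mod p m M x), <- (trunc_mod p m M y); auto.
  all: try rewrite H; auto.
Qed.

Lemma digits_valid p c : (p <> 0)%nat -> valid p (digits p c).
Proof. intros Hp i. unfold digits. apply Nat.mod_upper_bound; auto. Qed.

Lemma inG0b_spec G0 n : inG0b G0 n = true <-> In n G0.
Proof.
  unfold inG0b. rewrite existsb_exists. split.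
  - intros [x [Hx He]]. apply Nat.eqb_eq in He. subst. auto.
  - intros H. exists n. split; auto. apply Nat.eqb_refl.
Qed.

Lemma inK_digits p N G0 c : (p <> 0)%nat ->
  inG0b G0 (trunc p N (digits p c)) = true -> inK p N G0 (digits p c).
Proof. intros Hp H. split. apply digits_valid; auto. apply inG0b_spec; auto. Qed.

Lemma trunc_ext p m x y : (forall i, (i < m)%nat -> x i = y i) -> trunc p m x = trunc p m y.
Proof.
  induction m as [|m IH]; intros H; simpl; auto.
  rewrite IH by (intros; apply H; lia). rewrite (H m) by lia. auto.
Qed.

(* The canonical finite representative of the level-m ball containing x. *)
Definition dig p m x := digits p (trunc p m x).

Lemma trunc_dig p m x : (p <> 0)%nat -> valid p x -> trunc p m (dig p m x) = trunc p m x.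
Proof.
  intros Hp Hv. unfold dig. rewrite trunc_digits by auto.
  apply Nat.mod_small, trunc_lt; auto.
Qed.

Lemma inK_dig p N G0 m x : (p <> 0)%nat -> (N <= m)%nat -> inK p N G0 x -> inK p N G0 (dig p m x).
Proof.
  intros Hp Hm [Hv Hi]. split. apply digits_valid; auto.
  rewrite (trunc_eq_le p N m _ x); auto. apply digits_valid; auto. apply trunc_dig; auto.
Qed.

Definition infoft (P : nat -> Prop) := forall n0, exists n, (n0 <= n)%nat /\ P n.

Lemma pigeon (Q : nat -> Prop) (g : nat -> nat) (D : nat) :
  (forall d, (d < D)%nat -> ~ infoft (fun n => Q n /\ g n = d)) ->
  exists b, forall n, (b <= n)%nat -> Q n -> (D <= g n)%nat.
Proof.
  induction D as [|D IH]; intros H.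
  - exists 0%nat. intros. lia.
  - destruct IH as [b1 Hb1]. { intros d Hd. apply H. lia. }
    assert (HD := H D (Nat.lt_succ_diag_r D)).
    unfold infoft in HD. apply not_all_ex_not in HD. destruct HD as [b2 Hb2].
    exists (Nat.max b1 b2). intros n Hn Qn.
    assert (D <= g n)%nat by (apply Hb1; auto; lia).
    destruct (Nat.eq_dec (g n) D) as [E|E]; [|lia].
    exfalso. apply Hb2. exists n. split; [lia|]. auto.
Qed.

Lemma pigeon2 (Q : nat -> Prop) (g : nat -> nat) (p : nat) :
  infoft Q -> (forall n, Q n -> (g n < p)%nat) ->
  exists d, (d < p)%nat /\ infoft (fun n => Q n /\ g n = d).
Proof.
  intros HQ Hg. apply NNPP. intros Hc.
  destruct (pigeon Q g p) as [b Hb].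
  { intros d Hd Hi. apply Hc. exists d. auto. }
  destruct (HQ b) as [n [Hn Qn]]. specialize (Hb n Hn Qn). specialize (Hg n Qn). lia.
Qed.

Definition agree (x z : digseq) (k : nat) := forall i, (i < k)%nat -> x i = z i.

Definition kstep (xs : nat -> digseq) (pre : digseq) (k : nat) : nat :=
  epsilon (inhabits 0%nat) (fun d => infoft (fun n => agree (xs n) pre k /\ xs n k = d)).

(* The first k digits of a cluster point of xs, built digit by digit. *)
Fixpoint zf (xs : nat -> digseq) (k : nat) : digseq :=
  match k with
  | O => fun _ => 0%nat
  | S k => fun i => if (i <? k)%nat then zf xs k i else kstep xs (zf xs k) k
  end.

Lemma koenig p (xs : nat -> digseq) :
  (forall n, valid p (xs n)) ->
  exists z, valid p z /\ forall k, infoft (fun n => agree (xs n) z k).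
Proof.
  intros Hv.
  assert (Hinv : forall k, infoft (fun n => agree (xs n) (zf xs k) k) /\
                           (forall i, (i < k)%nat -> (zf xs k i < p)%nat)).
  { induction k as [|k [IH1 IH2]].
    - split. intros n0. exists n0. split; auto. intros i Hi; lia. intros; lia.
    - destruct (pigeon2 _ (fun n => xs n k) p IH1) as [d [Hd Hinf]].
      { intros n _. apply Hv. }
      assert (Hs : infoft (fun n => agree (xs n) (zf xs k) k /\ xs n k = kstep xs (zf xs k) k)).
      { unfold kstep. apply epsilon_spec. exists d; auto. }
      split.
      + intros n0. destruct (Hs n0) as [n [Hn [Ha He]]]. exists n. split; auto.
        intros i Hi. simpl. destruct (Nat.ltb_spec i k). apply Ha; auto.
        assert (i = k) by lia. subst. auto.
      + intros i Hi. simpl. destruct (Nat.ltb_spec i k). apply IH2; auto.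
        destruct (Hs 0%nat) as [n [_ [_ He]]]. rewrite <- He. apply Hv. }
  assert (Hstab : forall k i, (i < k)%nat -> zf xs k i = zf xs (S i) i).
  { induction k as [|k IH]; intros i Hi; [lia|].
    simpl. destruct (Nat.ltb_spec i k). rewrite IH by auto. simpl.
    destruct (Nat.ltb_spec i i); [lia|]. auto.
    assert (i = k) by lia. subst. simpl. destruct (Nat.ltb_spec k k); [lia|]. auto. }
  exists (fun i => zf xs (S i) i). split.
  - intros i. apply (proj2 (Hinv (S i))). lia.
  - intros k n0. destruct (proj1 (Hinv k) n0) as [n [Hn Ha]]. exists n. split; auto.
    intros i Hi. rewrite Ha by auto. apply Hstab; auto.
Qed.

Lemma koenig_K p N G0 (xs : nat -> digseq) :
  (forall n, inK p N G0 (xs n)) ->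
  exists z, inK p N G0 z /\ forall k, infoft (fun n => trunc p k (xs n) = trunc p k z).
Proof.
  intros HK. destruct (koenig p xs) as [z [Hz Hinf]]. intros n; apply HK.
  exists z. split.
  - split; auto. destruct (Hinf N 0%nat) as [n [_ Ha]].
    rewrite <- (trunc_ext p N (xs n) z) by auto. apply HK.
  - intros k n0. destruct (Hinf k n0) as [n [Hn Ha]]. exists n. split; auto. apply trunc_ext; auto.
Qed.

Lemma Rabs_le_inv x B : Rabs x <= B -> - B <= x <= B.
Proof. unfold Rabs. destruct (Rcase_abs x); lra. Qed.

Lemma Rabs_sub_le a b : Rabs (a - b) <= Rabs a + Rabs b.
Proof. unfold Rminus. eapply Rle_trans. apply Rabs_triang. rewrite Rabs_Ropp. lra. Qed.

Lemma Lim_spec w l : Un_cv w l -> Lim w = l.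
Proof.
  intros H. unfold Lim. apply (UL_sequence w). 2: exact H.
  apply (epsilon_spec (inhabits 0) (fun l => Un_cv w l)). exists l; auto.
Qed.

Lemma Lim_cauchy w : Cauchy_crit w -> Un_cv w (Lim w).
Proof.
  intros H. destruct (R_complete w H) as [l Hl]. rewrite (Lim_spec w l); auto.
Qed.

Lemma Lim_ext w1 w2 : (forall n, w1 n = w2 n) -> Lim w1 = Lim w2.
Proof. intros H. f_equal. apply functional_extensionality; auto. Qed.

Lemma Lim_const c : Lim (fun _ => c) = c.
Proof. apply Lim_spec. intros e He. exists 0%nat. intros. unfold Rdist. rewrite Rminus_diag, Rabs_R0. lra. Qed.

Lemma cv_le_bound w l B : Un_cv w l -> (forall n, w n <= B) -> l <= B.
Proof.
  intros H Hb. apply (@Rle_cv_lim w (fun _ => B) l B); auto.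
  intros e He. exists 0%nat. intros. unfold Rdist. rewrite Rminus_diag, Rabs_R0. lra.
Qed.

Lemma cv_abs_bound w l B : Un_cv w l -> (forall n, Rabs (w n) <= B) -> Rabs l <= B.
Proof.
  intros H Hb. apply Rabs_le. split.
  - assert (Un_cv (fun n => - w n) (- l)).
    { intros e He. destruct (H e He) as [n0 Hn]. exists n0. intros n Hn'.
      unfold Rdist in *. replace (- w n - - l) with (- (w n - l)) by ring. rewrite Rabs_Ropp. auto. }
    assert (- l <= B). { apply (cv_le_bound _ _ B H0). intros n. specialize (Hb n). apply Rabs_le_inv in Hb. lra. }
    lra.
  - apply (cv_le_bound w l B H). intros n. specialize (Hb n). apply Rabs_le_inv in Hb. lra.
Qed.

Lemma cv_abs_bound_ev w l B n0 : Un_cv w l -> (forall n, (n0 <= n)%nat -> Rabs (w n) <= B) -> Rabs l <= B.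
Proof.
  intros H Hb. apply (cv_abs_bound (fun n => w (n + n0)%nat)).
  - intros e He. destruct (H e He) as [n1 Hn]. exists n1. intros n Hn'. apply Hn. lia.
  - intros n. apply Hb. lia.
Qed.

Lemma cv_scal w l c : Un_cv w l -> Un_cv (fun n => c * w n) (c * l).
Proof.
  intros H. apply (CV_mult (fun _ => c) w c l); auto.
  intros e He. exists 0%nat. intros. unfold Rdist. rewrite Rminus_diag, Rabs_R0. lra.
Qed.

Lemma sumR_ext n F G : (forall i, (i < n)%nat -> F i = G i) -> sumR n F = sumR n G.
Proof. induction n; simpl; intros H; auto. rewrite IHn, H; auto. Qed.

Lemma sumR_add a b F : sumR (a + b) F = sumR a F + sumR b (fun i => F (a + i)%nat).
Proof.
  induction b as [|b IH]; simpl. rewrite Nat.add_0_r; ring.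
  rewrite Nat.add_succ_r. simpl. rewrite IH. ring.
Qed.

Lemma sumR_split q P F :
  sumR (q * P) F = sumR q (fun j => sumR P (fun c => F (j * P + c)%nat)).
Proof.
  induction q as [|q IH]; simpl; auto.
  replace (P + q * P)%nat with (q * P + P)%nat by lia.
  rewrite sumR_add, IH. auto.
Qed.

Lemma sumR_minus n F G : sumR n (fun i => F i - G i) = sumR n F - sumR n G.
Proof. induction n; simpl; [ring|]. rewrite IHn; ring. Qed.

Lemma sumR_scal n c F : sumR n (fun i => c * F i) = c * sumR n F.
Proof. induction n; simpl; [ring|]. rewrite IHn; ring. Qed.

Lemma sumR_const n c : sumR n (fun _ => c) = INR n * c.
Proof. induction n; cbn [sumR]; [simpl; ring|]. rewrite IHn, S_INR. ring. Qed.

Lemma sumR_le n F G : (forall i, (i < n)%nat -> F i <= G i) -> sumR n F <= sumR n G.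
Proof. induction n; simpl; intros H; [lra|]. apply Rplus_le_compat; auto. Qed.

Lemma sumR_abs n F : Rabs (sumR n F) <= sumR n (fun i => Rabs (F i)).
Proof.
  induction n; simpl. rewrite Rabs_R0; lra.
  eapply Rle_trans. apply Rabs_triang. lra.
Qed.

Lemma sumR_abs_le n F B : (forall i, (i < n)%nat -> Rabs (F i) <= B) -> Rabs (sumR n F) <= INR n * B.
Proof.
  intros H. eapply Rle_trans. apply sumR_abs. rewrite <- sumR_const. apply sumR_le; auto.
Qed.

Lemma sumR_single n F i0 : (i0 < n)%nat -> (forall i, (i < n)%nat -> i <> i0 -> F i = 0) ->
  sumR n F = F i0.
Proof.
  induction n; intros Hi H; [lia|]. simpl.
  destruct (Nat.eq_dec i0 n) as [E|E].
  - subst. rewrite (sumR_ext n F (fun _ => 0)). rewrite sumR_const. ring.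
    intros i Hi'. apply H; lia.
  - rewrite IHn. rewrite (H n) by lia. ring. lia. intros; apply H; lia.
Qed.

Lemma avg_refine_low q P F G e : (0 < q)%nat -> (0 < P)%nat ->
  (forall j c, (j < q)%nat -> (c < P)%nat -> Rabs (F (j * P + c)%nat - G c) <= e) ->
  Rabs (sumR (q * P) F / INR (q * P) - sumR P G / INR P) <= e.
Proof.
  intros Hq HP H.
  assert (Hq' : 0 < INR q) by (apply lt_0_INR; auto).
  assert (HP' : 0 < INR P) by (apply lt_0_INR; auto).
  rewrite sumR_split, mult_INR.
  replace (sumR P G / INR P) with (sumR q (fun _ => sumR P G) / (INR q * INR P)).
  2: { rewrite sumR_const. field. lra. }
  unfold Rdiv. rewrite <- Rmult_minus_distr_r, <- sumR_minus.
  rewrite (sumR_ext q _ (fun j => sumR P (fun c => F (j * P + c)%nat - G c))).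
  2: { intros. rewrite sumR_minus. auto. }
  rewrite Rabs_mult, Rabs_inv, (Rabs_right (INR q * INR P)) by nra.
  apply (Rmult_le_reg_r (INR q * INR P)); [nra|].
  rewrite Rmult_assoc, Rinv_l by nra. rewrite Rmult_1_r.
  replace (e * (INR q * INR P)) with (INR q * (INR P * e)) by ring.
  apply sumR_abs_le. intros j Hj. apply sumR_abs_le. intros c Hc. auto.
Qed.

Lemma avg_refine_high n q F G e : (0 < q)%nat -> (0 < n)%nat ->
  (forall k j, (k < n)%nat -> (j < q)%nat -> Rabs (F (k * q + j)%nat - G k) <= e) ->
  Rabs (sumR (n * q) F / INR (n * q) - sumR n G / INR n) <= e.
Proof.
  intros Hq Hn H.
  assert (Hq' : 0 < INR q) by (apply lt_0_INR; auto).
  assert (Hn' : 0 < INR n) by (apply lt_0_INR; auto).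
  rewrite sumR_split, mult_INR.
  replace (sumR n G / INR n) with (sumR n (fun k => sumR q (fun _ => G k)) / (INR n * INR q)).
  2: { rewrite (sumR_ext n _ (fun k => INR q * G k)). rewrite sumR_scal. field. lra.
       intros. rewrite sumR_const. auto. }
  unfold Rdiv. rewrite <- Rmult_minus_distr_r, <- sumR_minus.
  rewrite (sumR_ext n _ (fun k => sumR q (fun j => F (k * q + j)%nat - G k))).
  2: { intros. rewrite sumR_minus. auto. }
  rewrite Rabs_mult, Rabs_inv, (Rabs_right (INR n * INR q)) by nra.
  apply (Rmult_le_reg_r (INR n * INR q)); [nra|].
  rewrite Rmult_assoc, Rinv_l by nra. rewrite Rmult_1_r.
  replace (e * (INR n * INR q)) with (INR n * (INR q * e)) by ring.
  apply sumR_abs_le. intros k Hk. apply sumR_abs_le. intros j Hj. auto.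
Qed.

Lemma sumL_abs_le (l : list nat) F B : (forall k, In k l -> Rabs (F k) <= B) ->
  Rabs (sumL l F) <= INR (length l) * B.
Proof.
  induction l as [|k l IH]; intros H; cbn [sumL fold_right length].
  - simpl. rewrite Rabs_R0. lra.
  - eapply Rle_trans. apply Rabs_triang. rewrite S_INR. fold (sumL l F).
    assert (Rabs (F k) <= B) by (apply H; simpl; auto).
    assert (Rabs (sumL l F) <= INR (length l) * B) by (apply IH; intros; apply H; simpl; auto).
    lra.
Qed.

Definition unif_cont p N G0 (phi : digseq -> R) : Prop :=
  forall e, 0 < e -> exists m, (N <= m)%nat /\ forall x y, inK p N G0 x -> inK p N G0 y ->
    trunc p m x = trunc p m y -> Rabs (phi x - phi y) <= e.

Definition haar_sum p N G0 (psi : digseq -> R) (M : nat) : R :=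
  sumR (p ^ M) (fun c => if inG0b G0 (trunc p N (digits p c))
        then psi (digits p c) / INR (p ^ M) else 0).

Lemma haarK_haar_sum p N G0 psi : haarK p N G0 psi = Lim (haar_sum p N G0 psi).
Proof. reflexivity. Qed.

Lemma pow_pos_INR p M : (p <> 0)%nat -> 0 < INR (p ^ M).
Proof. intros. apply lt_0_INR. apply Nat.neq_0_lt_0. apply Nat.pow_nonzero; auto. Qed.

Lemma mod_shift p m M j c : (m <= M)%nat -> (p <> 0)%nat ->
  ((j * p ^ M + c) mod p ^ m = c mod p ^ m)%nat.
Proof.
  intros H Hp. replace (p ^ M)%nat with (p ^ (M - m) * p ^ m)%nat.
  rewrite Nat.add_comm, Nat.mul_assoc, Nat.Div0.mod_add. auto.
  rewrite <- Nat.pow_add_r. f_equal. lia.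
Qed.

Lemma haar_sum_avg p N G0 psi M : (p <> 0)%nat ->
  haar_sum p N G0 psi M = sumR (p ^ M) (fun c => if inG0b G0 (trunc p N (digits p c))
        then psi (digits p c) else 0) / INR (p ^ M).
Proof.
  intros Hp. unfold haar_sum. unfold Rdiv at 2. rewrite Rmult_comm, <- sumR_scal.
  apply sumR_ext. intros i _. destruct inG0b; unfold Rdiv; ring.
Qed.

Lemma haar_sum_cauchy p N G0 psi : (p <> 0)%nat -> unif_cont p N G0 psi -> Cauchy_crit (haar_sum p N G0 psi).
Proof.
  intros Hp Hu e He. destruct (Hu (e / 2)) as [m [Hm Hmm]]; [lra|].
  assert (Hw : forall M M', (m <= M')%nat -> (M' <= M)%nat ->
            Rabs (haar_sum p N G0 psi M - haar_sum p N G0 psi M') <= e / 2).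
  { intros M M' H1 H2. rewrite !haar_sum_avg by auto.
    replace (p ^ M)%nat with (p ^ (M - M') * p ^ M')%nat.
    2: { rewrite <- Nat.pow_add_r. f_equal. lia. }
    apply avg_refine_low.
    1,2: apply Nat.neq_0_lt_0, Nat.pow_nonzero; auto.
    intros j c Hj Hc.
    assert (Eok : trunc p N (digits p (j * p ^ M' + c)) = trunc p N (digits p c)).
    { rewrite !trunc_digits by auto. apply mod_shift; auto; lia. }
    rewrite Eok. destruct (inG0b G0 (trunc p N (digits p c))) eqn:E.
    - apply Hmm. apply inK_digits; auto. rewrite Eok; auto. apply inK_digits; auto.
      rewrite !trunc_digits by auto. apply mod_shift; auto; lia.
    - rewrite Rminus_diag, Rabs_R0. lra. }
  exists m. intros n n' Hn Hn'. unfold Rdist.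
  destruct (Nat.le_ge_cases n n').
  - rewrite Rabs_minus_sym. eapply Rle_lt_trans. apply Hw; auto. lra.
  - eapply Rle_lt_trans. apply Hw; auto. lra.
Qed.

Lemma haar_cv p N G0 psi : (p <> 0)%nat -> unif_cont p N G0 psi ->
  Un_cv (haar_sum p N G0 psi) (haarK p N G0 psi).
Proof. intros. apply Lim_cauchy, haar_sum_cauchy; auto. Qed.

Lemma haar_sum_diff p N G0 psi1 psi2 B M : (p <> 0)%nat -> 0 <= B ->
  (forall x, inK p N G0 x -> Rabs (psi1 x - psi2 x) <= B) ->
  Rabs (haar_sum p N G0 psi1 M - haar_sum p N G0 psi2 M) <= B.
Proof.
  intros Hp HB H. unfold haar_sum. rewrite <- sumR_minus.
  assert (HP := pow_pos_INR p M Hp).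
  replace B with (INR (p ^ M) * (B / INR (p ^ M))) by (field; lra).
  apply sumR_abs_le. intros c Hc. destruct inG0b eqn:E.
  - replace (psi1 (digits p c) / INR (p ^ M) - psi2 (digits p c) / INR (p ^ M))
      with ((psi1 (digits p c) - psi2 (digits p c)) / INR (p ^ M)) by (field; lra).
    unfold Rdiv. rewrite Rabs_mult, Rabs_inv, (Rabs_right (INR _)) by lra.
    apply Rmult_le_compat_r. left; apply Rinv_0_lt_compat; lra.
    apply H. apply inK_digits; auto.
  - rewrite Rminus_diag, Rabs_R0. unfold Rdiv. apply Rmult_le_pos; auto.
    left; apply Rinv_0_lt_compat; lra.
Qed.

Lemma haar_diff p N G0 psi1 psi2 B : (p <> 0)%nat -> unif_cont p N G0 psi1 -> unif_cont p N G0 psi2 -> 0 <= B ->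
  (forall x, inK p N G0 x -> Rabs (psi1 x - psi2 x) <= B) ->
  Rabs (haarK p N G0 psi1 - haarK p N G0 psi2) <= B.
Proof.
  intros Hp H1 H2 HB H.
  apply (cv_abs_bound (fun M => haar_sum p N G0 psi1 M - haar_sum p N G0 psi2 M)).
  apply CV_minus; apply haar_cv; auto.
  intros M. apply haar_sum_diff; auto.
Qed.

Lemma haar_ext p N G0 psi1 psi2 : (p <> 0)%nat ->
  (forall x, inK p N G0 x -> psi1 x = psi2 x) -> haarK p N G0 psi1 = haarK p N G0 psi2.
Proof.
  intros Hp H. rewrite !haarK_haar_sum. apply Lim_ext. intros M. unfold haar_sum. apply sumR_ext.
  intros c _. destruct inG0b eqn:E; auto. rewrite H; auto. apply inK_digits; auto.
Qed.

Lemma unif_cont_refine p N G0 phi e m m' : (p <> 0)%nat -> (m <= m')%nat ->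
  (forall x y, inK p N G0 x -> inK p N G0 y -> trunc p m x = trunc p m y -> Rabs (phi x - phi y) <= e) ->
  (forall x y, inK p N G0 x -> inK p N G0 y -> trunc p m' x = trunc p m' y -> Rabs (phi x - phi y) <= e).
Proof.
  intros Hp Hm H x y Hx Hy E. apply H; auto. apply (trunc_eq_le p m m'); auto.
  apply Hx. apply Hy.
Qed.

Lemma inXinf_unif_cont p N G0 phi : (p <> 0)%nat -> inXinf p N G0 phi -> unif_cont p N G0 phi.
Proof.
  intros Hp Hc. apply NNPP. intros Hn. unfold unif_cont in Hn.
  apply not_all_ex_not in Hn. destruct Hn as [e Hn].
  apply imply_to_and in Hn. destruct Hn as [He Hn].
  assert (Hb : forall m, exists xy : digseq * digseq, inK p N G0 (fst xy) /\ inK p N G0 (snd xy) /\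
             trunc p (m + N) (fst xy) = trunc p (m + N) (snd xy) /\ e < Rabs (phi (fst xy) - phi (snd xy))).
  { intros m. apply NNPP. intros Hm. apply Hn. exists (m + N)%nat. split; [lia|].
    intros x y Hx Hy E. apply Rnot_lt_le. intros Hl. apply Hm. exists (x, y). auto. }
  destruct (choice _ Hb) as [xy Hxy].
  destruct (koenig_K p N G0 (fun n => fst (xy n))) as [z [Hz Hinf]].
  { intros n; apply Hxy. }
  destruct (Hc z Hz (e / 2)) as [m0 Hm0]; [lra|].
  destruct (Hinf m0 m0) as [n [Hnn E]].
  destruct (Hxy n) as [H1 [H2 [H3 H4]]].
  assert (E2 : trunc p m0 (snd (xy n)) = trunc p m0 z).
  { rewrite <- E. symmetry. apply (trunc_eq_le p m0 (n + N)); auto. apply H1. apply H2. lia. }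
  assert (A1 := Hm0 _ H1 E). assert (A2 := Hm0 _ H2 E2).
  assert (Rabs (phi (fst (xy n)) - phi (snd (xy n))) < e).
  { replace (phi (fst (xy n)) - phi (snd (xy n))) with
      ((phi (fst (xy n)) - phi z) - (phi (snd (xy n)) - phi z)) by ring.
    eapply Rle_lt_trans. apply Rabs_sub_le. lra. }
  lra.
Qed.

Lemma inXinf_margin p N G0 a b phi : (p <> 0)%nat -> inXinf p N G0 phi -> inU p N G0 a b phi ->
  exists del, 0 < del /\ forall x, inK p N G0 x -> a + del <= phi x <= b - del.
Proof.
  intros Hp Hc Hu. apply NNPP. intros Hn.
  assert (Hb : forall n : nat, exists x, inK p N G0 x /\
            ~ (a + / INR (S n) <= phi x <= b - / INR (S n))).
  { intros n. apply NNPP. intros Hm. apply Hn. exists (/ INR (S n)). split.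
    apply Rinv_0_lt_compat, lt_0_INR; lia.
    intros x Hx. apply NNPP. intros Hq. apply Hm. exists x. auto. }
  destruct (choice _ Hb) as [xs Hxs].
  destruct (koenig_K p N G0 xs) as [z [Hz Hinf]]. intros n; apply Hxs.
  destruct (Hu z Hz) as [Ha Hb'].
  set (e := Rmin (phi z - a) (b - phi z) / 2).
  assert (He : 0 < e) by (unfold e, Rmin; destruct Rle_dec; lra).
  destruct (Hc z Hz e He) as [m0 Hm0].
  destruct (archimed (/ e)) as [Ha1 _].
  set (n1 := Z.to_nat (up (/ e))).
  assert (Hn1 : / e < INR n1).
  { unfold n1. rewrite INR_IZR_INZ, Z2Nat.id. auto. apply le_IZR.
    assert (0 < / e) by (apply Rinv_0_lt_compat; auto). lra. }
  destruct (Hinf m0 (Nat.max m0 n1)) as [n [Hnn E]].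
  destruct (Hxs n) as [HK Hnot]. apply Hnot.
  assert (A := Hm0 _ HK E). apply Rabs_def2 in A.
  assert (Hs : / INR (S n) < e).
  { assert (INR n1 <= INR n) by (apply le_INR; lia).
    rewrite S_INR. pose proof (pos_INR n).
    assert (HH : / e < INR n + 1) by lra.
    apply Rinv_lt_contravar in HH. rewrite Rinv_inv in HH. auto.
    apply Rmult_lt_0_compat. apply Rinv_0_lt_compat; auto. lra. }
  unfold e, Rmin in *; destruct Rle_dec; lra.
Qed.

Definition kernel_bound p N (G0 : list nat) := INR (p ^ N) * (INR (length G0) * INR (length G0)).

(* Bound on the operator norm of L on (X_infty, sup norm). *)
Definition gen_bound p N G0 := 2 * kernel_bound p N G0.

Definition adj01 (G0 : list nat) (A : nat -> nat -> R) :=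
  forall J K, In J G0 -> In K G0 -> A J K = 0 \/ A J K = 1.

(* phi is constant on the balls of radius p^-M of K_N (the functions of X_M). *)
Definition locconst p N G0 M (phi : digseq -> R) := forall x x', inK p N G0 x -> inK p N G0 x' ->
  trunc p M x = trunc p M x' -> phi x = phi x'.

Lemma scale_le e c : 0 < e -> 0 <= c -> e / (c + 1) * c <= e.
Proof.
  intros He Hc. assert (0 < e / (c + 1)) by (apply Rdiv_lt_0_compat; lra).
  replace (e / (c + 1) * c) with (e - e / (c + 1)) by (field; lra). lra.
Qed.

Lemma kernel_bound_nonneg p N G0 : 0 <= kernel_bound p N G0.
Proof. unfold kernel_bound. pose proof (pos_INR (p ^ N)). pose proof (pos_INR (length G0)).
  apply Rmult_le_pos; auto. apply Rmult_le_pos; auto. Qed.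

Lemma gen_bound_nonneg p N G0 : 0 <= gen_bound p N G0.
Proof. unfold gen_bound. pose proof (kernel_bound_nonneg p N G0). lra. Qed.

Lemma Omega_01 p M x a : Rabs (Omega p M x a) <= 1.
Proof. unfold Omega. destruct Nat.eqb; [rewrite Rabs_R1|rewrite Rabs_R0]; lra. Qed.

Lemma Omega_tr p M x x' a : trunc p M x = trunc p M x' -> Omega p M x a = Omega p M x' a.
Proof. intros H. unfold Omega. rewrite H. auto. Qed.

Lemma JN_bound p N G0 A x y : adj01 G0 A -> Rabs (JN p N G0 A x y) <= kernel_bound p N G0.
Proof.
  intros HA. unfold JN, kernel_bound. rewrite Rabs_mult, (Rabs_right (INR _)) by (apply Rle_ge, pos_INR).
  apply Rmult_le_compat_l. apply pos_INR.
  apply sumL_abs_le. intros J HJ. rewrite <- (Rmult_1_r (INR (length G0))).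
  apply sumL_abs_le. intros K HK. rewrite !Rabs_mult.
  assert (Rabs (A J K) <= 1) by (destruct (HA J K HJ HK) as [E|E]; rewrite E;
    [rewrite Rabs_R0|rewrite Rabs_R1]; lra).
  pose proof (Omega_01 p N x (digits p J)). pose proof (Omega_01 p N y (digits p K)).
  pose proof (Rabs_pos (A J K)). pose proof (Rabs_pos (Omega p N x (digits p J))).
  pose proof (Rabs_pos (Omega p N y (digits p K))).
  replace 1 with (1 * 1 * 1) by ring.
  apply Rmult_le_compat; try apply Rmult_le_pos; auto.
  apply Rmult_le_compat; auto.
Qed.

Lemma sumL_ext (l : list nat) F G : (forall k, F k = G k) -> sumL l F = sumL l G.
Proof. intros H. induction l; simpl; auto. unfold sumL in *. simpl. rewrite IHl, H. auto. Qed.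

Lemma JN_trx p N G0 A x x' y : trunc p N x = trunc p N x' -> JN p N G0 A x y = JN p N G0 A x' y.
Proof. intros H. unfold JN. f_equal. apply sumL_ext. intros J. apply sumL_ext. intros K.
  rewrite (Omega_tr p N x x' (digits p J) H). auto. Qed.

Lemma JN_try p N G0 A x y y' : trunc p N y = trunc p N y' -> JN p N G0 A x y = JN p N G0 A x y'.
Proof. intros H. unfold JN. f_equal. apply sumL_ext. intros J. apply sumL_ext. intros K.
  rewrite (Omega_tr p N y y' (digits p K) H). auto. Qed.

Lemma trunc_N_of p N G0 m x y : (p <> 0)%nat -> (N <= m)%nat -> inK p N G0 x -> inK p N G0 y ->
  trunc p m x = trunc p m y -> trunc p N x = trunc p N y.
Proof. intros Hp Hm Hx Hy E. apply (trunc_eq_le p N m); auto. apply Hx. apply Hy. Qed.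

Lemma sumR_nonneg_le n F i : (forall j, (j < n)%nat -> 0 <= F j) -> (i < n)%nat -> F i <= sumR n F.
Proof.
  induction n; intros H Hi; [lia|]. simpl.
  assert (0 <= sumR n F).
  { clear IHn Hi. induction n; simpl; [lra|]. assert (0 <= F n) by (apply H; lia).
    assert (0 <= sumR n F) by (apply IHn; intros; apply H; lia). lra. }
  destruct (Nat.eq_dec i n).
  - subst. lra.
  - assert (F i <= sumR n F). { apply IHn. intros; apply H; lia. lia. }
    assert (0 <= F n) by (apply H; lia). lra.
Qed.

Lemma unif_cont_bounded p N G0 phi : (p <> 0)%nat -> unif_cont p N G0 phi ->
  exists B, 0 <= B /\ forall x, inK p N G0 x -> Rabs (phi x) <= B.
Proof.
  intros Hp Hu. destruct (Hu 1) as [m [Hm H]]; [lra|].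
  exists (sumR (p ^ m) (fun c => Rabs (phi (digits p c))) + 1). split.
  - assert (0 <= sumR (p ^ m) (fun c => Rabs (phi (digits p c)))).
    { clear. induction (p ^ m)%nat; simpl; [lra|]. pose proof (Rabs_pos (phi (digits p n))). lra. }
    lra.
  - intros x Hx. assert (Hd := inK_dig p N G0 m x Hp Hm Hx).
    assert (E := H x _ Hx Hd (eq_sym (trunc_dig p m x Hp (proj1 Hx)))).
    assert (Rabs (phi (dig p m x)) <= sumR (p ^ m) (fun c => Rabs (phi (digits p c)))).
    { unfold dig. apply (sumR_nonneg_le _ (fun c => Rabs (phi (digits p c)))).
      intros; apply Rabs_pos. apply trunc_lt, Hx. }
    replace (phi x) with ((phi x - phi (dig p m x)) + phi (dig p m x)) by ring.
    eapply Rle_trans. apply Rabs_triang. lra.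
Qed.

Lemma locconst_unif_cont p N G0 M phi : (N <= M)%nat -> locconst p N G0 M phi -> unif_cont p N G0 phi.
Proof.
  intros HM H e He. exists M. split; auto. intros x y Hx Hy E.
  rewrite (H x y Hx Hy E), Rminus_diag, Rabs_R0. lra.
Qed.

Lemma integrand_unif_cont p N G0 A phi x : (p <> 0)%nat -> adj01 G0 A -> unif_cont p N G0 phi ->
  unif_cont p N G0 (fun y => (phi y - phi x) * JN p N G0 A x y).
Proof.
  intros Hp HA Hu e He. pose proof (kernel_bound_nonneg p N G0) as HCJ.
  destruct (Hu (e / (kernel_bound p N G0 + 1))) as [m [Hm H]].
  { apply Rdiv_lt_0_compat; lra. }
  exists m. split; auto. intros y y' Hy Hy' E.
  rewrite (JN_try p N G0 A x y y') by (eapply trunc_N_of; eauto).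
  replace ((phi y - phi x) * JN p N G0 A x y' - (phi y' - phi x) * JN p N G0 A x y')
    with ((phi y - phi y') * JN p N G0 A x y') by ring.
  rewrite Rabs_mult. specialize (H y y' Hy Hy' E). pose proof (JN_bound p N G0 A x y' HA).
  apply Rle_trans with (e / (kernel_bound p N G0 + 1) * kernel_bound p N G0).
  apply Rmult_le_compat; auto using Rabs_pos.
  apply scale_le; lra.
Qed.

Lemma Lop_diff p N G0 A phi1 phi2 B x : (p <> 0)%nat -> adj01 G0 A -> unif_cont p N G0 phi1 -> unif_cont p N G0 phi2 ->
  0 <= B -> (forall y, inK p N G0 y -> Rabs (phi1 y - phi2 y) <= B) -> inK p N G0 x ->
  Rabs (Lop p N G0 A phi1 x - Lop p N G0 A phi2 x) <= gen_bound p N G0 * B.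
Proof.
  intros Hp HA H1 H2 HB H Hx. unfold Lop. apply haar_diff; auto using integrand_unif_cont.
  unfold gen_bound. pose proof (kernel_bound_nonneg p N G0). nra.
  intros y Hy. replace ((phi1 y - phi1 x) * JN p N G0 A x y - (phi2 y - phi2 x) * JN p N G0 A x y)
    with (((phi1 y - phi2 y) - (phi1 x - phi2 x)) * JN p N G0 A x y) by ring.
  rewrite Rabs_mult. unfold gen_bound. pose proof (JN_bound p N G0 A x y HA).
  replace (2 * kernel_bound p N G0 * B) with ((B + B) * kernel_bound p N G0) by ring.
  apply Rmult_le_compat; auto using Rabs_pos.
  eapply Rle_trans. apply Rabs_sub_le. pose proof (H y Hy). pose proof (H x Hx). lra.
Qed.

Lemma Lop_unif_cont p N G0 A phi : (p <> 0)%nat -> adj01 G0 A -> unif_cont p N G0 phi -> unif_cont p N G0 (Lop p N G0 A phi).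
Proof.
  intros Hp HA Hu e He. pose proof (kernel_bound_nonneg p N G0) as HCJ.
  destruct (Hu (e / (kernel_bound p N G0 + 1))) as [m [Hm H]].
  { apply Rdiv_lt_0_compat; lra. }
  exists m. split; auto. intros x x' Hx Hx' E. unfold Lop.
  assert (He' : 0 <= e / (kernel_bound p N G0 + 1)) by (left; apply Rdiv_lt_0_compat; lra).
  apply Rle_trans with (e / (kernel_bound p N G0 + 1) * kernel_bound p N G0).
  - apply haar_diff; auto using integrand_unif_cont. apply Rmult_le_pos; auto.
    intros y Hy. rewrite (JN_trx p N G0 A x x' y) by (eapply trunc_N_of; eauto).
    replace ((phi y - phi x) * JN p N G0 A x' y - (phi y - phi x') * JN p N G0 A x' y)
      with ((phi x' - phi x) * JN p N G0 A x' y) by ring.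
    rewrite Rabs_mult. apply Rmult_le_compat; auto using Rabs_pos, JN_bound.
  - apply scale_le; lra.
Qed.

Lemma Lop_ext p N G0 A phi1 phi2 x : (p <> 0)%nat ->
  (forall y, inK p N G0 y -> phi1 y = phi2 y) -> inK p N G0 x ->
  Lop p N G0 A phi1 x = Lop p N G0 A phi2 x.
Proof.
  intros Hp H Hx. unfold Lop. apply haar_ext; auto. intros y Hy. rewrite !H; auto.
Qed.

(* L preserves X_M for M >= N: X_M is invariant and L_M is the restriction of L. *)
Lemma Lop_locconst p N G0 A M phi : (p <> 0)%nat -> (N <= M)%nat -> locconst p N G0 M phi -> locconst p N G0 M (Lop p N G0 A phi).
Proof.
  intros Hp HM H x x' Hx Hx' E. unfold Lop. apply haar_ext; auto. intros y Hy.
  rewrite (H x x' Hx Hx' E). rewrite (JN_trx p N G0 A x x' y); auto. eapply trunc_N_of; eauto.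
Qed.

Definition Lpow p N G0 A k phi := Nat.iter k (Lop p N G0 A) phi.

Lemma Lpow_S p N G0 A k phi : Lpow p N G0 A (S k) phi = Lop p N G0 A (Lpow p N G0 A k phi).
Proof. reflexivity. Qed.

Lemma Lpow_unif_cont p N G0 A k phi : (p <> 0)%nat -> adj01 G0 A -> unif_cont p N G0 phi -> unif_cont p N G0 (Lpow p N G0 A k phi).
Proof. intros. induction k; auto. rewrite Lpow_S. apply Lop_unif_cont; auto. Qed.

Lemma Lpow_locconst p N G0 A M k phi : (p <> 0)%nat -> (N <= M)%nat -> locconst p N G0 M phi -> locconst p N G0 M (Lpow p N G0 A k phi).
Proof. intros. induction k; auto. rewrite Lpow_S. apply Lop_locconst; auto. Qed.

Lemma Lpow_ext p N G0 A k phi1 phi2 x : (p <> 0)%nat ->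
  (forall y, inK p N G0 y -> phi1 y = phi2 y) -> inK p N G0 x ->
  Lpow p N G0 A k phi1 x = Lpow p N G0 A k phi2 x.
Proof.
  intros Hp H. revert x. induction k; intros x Hx; auto.
  rewrite !Lpow_S. apply Lop_ext; auto.
Qed.

Lemma Lpow_diff p N G0 A k phi1 phi2 B x : (p <> 0)%nat -> adj01 G0 A -> unif_cont p N G0 phi1 -> unif_cont p N G0 phi2 ->
  0 <= B -> (forall y, inK p N G0 y -> Rabs (phi1 y - phi2 y) <= B) -> inK p N G0 x ->
  Rabs (Lpow p N G0 A k phi1 x - Lpow p N G0 A k phi2 x) <= gen_bound p N G0 ^ k * B.
Proof.
  intros Hp HA H1 H2 HB H. revert x. induction k; intros x Hx.
  - simpl. rewrite Rmult_1_l. auto.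
  - rewrite !Lpow_S. simpl pow. rewrite Rmult_assoc. apply Lop_diff; auto using Lpow_unif_cont.
    apply Rmult_le_pos; auto. apply pow_le, gen_bound_nonneg.
Qed.

Lemma Lpow_zero p N G0 A k x : (p <> 0)%nat -> inK p N G0 x -> Lpow p N G0 A k (fun _ => 0) x = 0.
Proof.
  intros Hp. revert x. induction k; intros x Hx; auto.
  rewrite Lpow_S. rewrite (Lop_ext p N G0 A _ (fun _ => 0)); auto.
  unfold Lop. rewrite (haar_ext p N G0 _ (fun _ => 0)); auto.
  rewrite haarK_haar_sum. rewrite (Lim_ext _ (fun _ => 0)). apply Lim_const. intros M. unfold haar_sum.
  rewrite (sumR_ext _ _ (fun _ => 0)). rewrite sumR_const. ring.
  intros c _. destruct inG0b; unfold Rdiv; ring.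
  intros; ring.
Qed.

Lemma Lpow_bound p N G0 A k phi B x : (p <> 0)%nat -> adj01 G0 A -> unif_cont p N G0 phi ->
  0 <= B -> (forall y, inK p N G0 y -> Rabs (phi y) <= B) -> inK p N G0 x ->
  Rabs (Lpow p N G0 A k phi x) <= gen_bound p N G0 ^ k * B.
Proof.
  intros Hp HA Hu HB H Hx. rewrite <- (Rminus_0_r (Lpow p N G0 A k phi x)).
  rewrite <- (Lpow_zero p N G0 A k x Hp Hx). apply Lpow_diff; auto.
  apply (locconst_unif_cont p N G0 N); auto. intros ? ? ? ? ?; auto.
  intros y Hy. rewrite Rminus_0_r. auto.
Qed.

Definition exp_partial x n := sum_f_R0 (fun k => x ^ k / INR (fact k)) n.

Lemma exp_partial_cv x : Un_cv (exp_partial x) (exp x).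
Proof.
  assert (H := E1_cvg x). intros e He. destruct (H e He) as [n0 Hn]. exists n0. intros n Hn'.
  unfold exp_partial. rewrite (sum_eq _ (fun k => / INR (fact k) * x ^ k)). apply Hn; auto.
  intros. unfold Rdiv. ring.
Qed.

Lemma sum_scal_l c a n : sum_f_R0 (fun k => c * a k) n = c * sum_f_R0 a n.
Proof. induction n; simpl; auto. rewrite IHn. ring. Qed.

Lemma exp_partial_le x n : 0 <= x -> exp_partial x n <= exp x.
Proof.
  intros Hx. apply (@Rle_cv_lim (fun _ => exp_partial x n) (fun m => exp_partial x (m + n))).
  - intros m. induction m. simpl Nat.add. lra.
    change (exp_partial x (S m + n)) with (exp_partial x (m + n) + x ^ S (m + n) / INR (fact (S (m + n)))).
    assert (0 <= x ^ S (m + n) / INR (fact (S (m + n)))).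
    { unfold Rdiv. apply Rmult_le_pos. apply pow_le; auto. left; apply Rinv_0_lt_compat, INR_fact_lt_0. }
    lra.
  - intros e He. exists 0%nat. intros. unfold Rdist. rewrite Rminus_diag, Rabs_R0. lra.
  - intros e He. destruct (exp_partial_cv x e He) as [n0 Hn]. exists n0. intros m Hm. apply Hn. lia.
Qed.

Definition exp_term p N G0 A t phi x k := t ^ k / INR (fact k) * Lpow p N G0 A k phi x.

Lemma expL_eq p N G0 A t phi x :
  expL p N G0 A t phi x = Lim (fun n => sum_f_R0 (exp_term p N G0 A t phi x) n).
Proof. reflexivity. Qed.

Lemma exp_term_bound p N G0 A t phi B x k : (p <> 0)%nat -> adj01 G0 A -> unif_cont p N G0 phi ->
  0 <= B -> (forall y, inK p N G0 y -> Rabs (phi y) <= B) -> inK p N G0 x ->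
  Rabs (exp_term p N G0 A t phi x k) <= B * ((gen_bound p N G0 * Rabs t) ^ k / INR (fact k)).
Proof.
  intros. unfold exp_term. rewrite Rabs_mult. unfold Rdiv. rewrite Rabs_mult, Rabs_inv, <- RPow_abs.
  rewrite (Rabs_right (INR (fact k))) by (left; apply INR_fact_lt_0).
  pose proof (Lpow_bound p N G0 A k phi B x H H0 H1 H2 H3 H4).
  rewrite Rpow_mult_distr.
  assert (0 <= / INR (fact k)) by (left; apply Rinv_0_lt_compat, INR_fact_lt_0).
  assert (0 <= Rabs t ^ k) by (apply pow_le, Rabs_pos).
  assert (0 <= gen_bound p N G0 ^ k) by (apply pow_le, gen_bound_nonneg).
  replace (B * (gen_bound p N G0 ^ k * Rabs t ^ k * / INR (fact k))) with
    (Rabs t ^ k * / INR (fact k) * (gen_bound p N G0 ^ k * B)) by ring.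
  apply Rmult_le_compat_l; auto. apply Rmult_le_pos; auto.
Qed.

Lemma series_cv_maj (an bn : nat -> R) lb : (forall k, Rabs (an k) <= bn k) ->
  Un_cv (fun n => sum_f_R0 bn n) lb -> exists l, Un_cv (fun n => sum_f_R0 an n) l.
Proof.
  intros H Hb. destruct (Rseries_CV_comp (fun k => Rabs (an k)) bn) as [l Hl].
  intros; split; auto using Rabs_pos. exists lb; auto.
  destruct (cv_cauchy_2 an (cauchy_abs an (cv_cauchy_1 _ (exist _ l Hl)))) as [l' Hl'].
  exists l'; auto.
Qed.

Lemma expL_cv p N G0 A t phi x : (p <> 0)%nat -> adj01 G0 A -> unif_cont p N G0 phi -> inK p N G0 x ->
  Un_cv (fun n => sum_f_R0 (exp_term p N G0 A t phi x) n) (expL p N G0 A t phi x).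
Proof.
  intros Hp HA Hu Hx. destruct (unif_cont_bounded p N G0 phi Hp Hu) as [B [HB Hb]].
  destruct (series_cv_maj (exp_term p N G0 A t phi x) (fun k => B * ((gen_bound p N G0 * Rabs t) ^ k / INR (fact k)))
     (B * exp (gen_bound p N G0 * Rabs t))) as [l Hl].
  - intros k. apply exp_term_bound; auto.
  - intros e He. assert (Hc := cv_scal _ _ B (exp_partial_cv (gen_bound p N G0 * Rabs t))).
    destruct (Hc e He) as [n0 Hn]. exists n0. intros n Hn'. rewrite sum_scal_l. apply Hn; auto.
  - rewrite expL_eq, (Lim_spec _ l Hl). auto.
Qed.

Lemma expL_zero p N G0 A t x : (p <> 0)%nat -> inK p N G0 x -> expL p N G0 A t (fun _ => 0) x = 0.
Proof.
  intros Hp Hx. rewrite expL_eq. rewrite (Lim_ext _ (fun _ => 0)). apply Lim_const.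
  intros n. rewrite (sum_eq _ (fun _ => 0)). induction n; simpl; auto. rewrite IHn. ring.
  intros. unfold exp_term. rewrite Lpow_zero; auto. ring.
Qed.

Lemma expL_diff p N G0 A t phi1 phi2 B x : (p <> 0)%nat -> adj01 G0 A -> unif_cont p N G0 phi1 -> unif_cont p N G0 phi2 ->
  0 <= B -> (forall y, inK p N G0 y -> Rabs (phi1 y - phi2 y) <= B) -> inK p N G0 x ->
  Rabs (expL p N G0 A t phi1 x - expL p N G0 A t phi2 x) <= B * exp (gen_bound p N G0 * Rabs t).
Proof.
  intros Hp HA H1 H2 HB H Hx.
  apply (cv_abs_bound (fun n => sum_f_R0 (exp_term p N G0 A t phi1 x) n - sum_f_R0 (exp_term p N G0 A t phi2 x) n)).
  apply CV_minus; apply expL_cv; auto.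
  intros n. rewrite <- minus_sum. eapply Rle_trans. apply Rsum_abs.
  assert (0 <= gen_bound p N G0 * Rabs t) by (apply Rmult_le_pos; [apply gen_bound_nonneg|apply Rabs_pos]).
  apply Rle_trans with (B * exp_partial (gen_bound p N G0 * Rabs t) n).
  2: { apply Rmult_le_compat_l; auto. apply exp_partial_le; auto. }
  unfold exp_partial. rewrite <- sum_scal_l. apply sum_Rle. intros k _.
  unfold exp_term. rewrite <- Rmult_minus_distr_l. rewrite Rabs_mult. unfold Rdiv.
  rewrite Rabs_mult, Rabs_inv, <- RPow_abs. rewrite (Rabs_right (INR (fact k))) by (left; apply INR_fact_lt_0).
  pose proof (Lpow_diff p N G0 A k phi1 phi2 B x Hp HA H1 H2 HB H Hx).
  assert (0 <= / INR (fact k)) by (left; apply Rinv_0_lt_compat, INR_fact_lt_0).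
  assert (0 <= Rabs t ^ k) by (apply pow_le, Rabs_pos).
  apply Rle_trans with (Rabs t ^ k * / INR (fact k) * (gen_bound p N G0 ^ k * B)).
  apply Rmult_le_compat_l; auto. apply Rmult_le_pos; auto.
  right. rewrite Rpow_mult_distr. ring.
Qed.

Lemma expL_bound p N G0 A t phi B x : (p <> 0)%nat -> adj01 G0 A -> unif_cont p N G0 phi ->
  0 <= B -> (forall y, inK p N G0 y -> Rabs (phi y) <= B) -> inK p N G0 x ->
  Rabs (expL p N G0 A t phi x) <= B * exp (gen_bound p N G0 * Rabs t).
Proof.
  intros. rewrite <- (Rminus_0_r (expL p N G0 A t phi x)).
  rewrite <- (expL_zero p N G0 A t x); auto. apply expL_diff; auto.
  apply (locconst_unif_cont p N G0 N); auto. intros ? ? ? ? ?; auto.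
  intros y Hy. rewrite Rminus_0_r. auto.
Qed.

Lemma expL_ext p N G0 A t phi1 phi2 x : (p <> 0)%nat ->
  (forall y, inK p N G0 y -> phi1 y = phi2 y) -> inK p N G0 x ->
  expL p N G0 A t phi1 x = expL p N G0 A t phi2 x.
Proof.
  intros Hp H Hx. rewrite !expL_eq. apply Lim_ext. intros n. apply sum_eq. intros k _.
  unfold exp_term. rewrite (Lpow_ext p N G0 A k phi1 phi2 x); auto.
Qed.

Lemma expL_locconst p N G0 A t M phi : (p <> 0)%nat -> (N <= M)%nat -> locconst p N G0 M phi ->
  locconst p N G0 M (expL p N G0 A t phi).
Proof.
  intros Hp HM H x x' Hx Hx' E. rewrite !expL_eq. apply Lim_ext. intros n. apply sum_eq. intros k _.
  unfold exp_term. rewrite (Lpow_locconst p N G0 A M k phi Hp HM H x x' Hx Hx' E). auto.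
Qed.

Lemma pow_diff_le t t' T k : Rabs t <= T -> Rabs t' <= T ->
  Rabs (t ^ k - t' ^ k) <= INR k * T ^ (pred k) * Rabs (t - t').
Proof.
  intros Ht Ht'. assert (HT : 0 <= T) by (pose proof (Rabs_pos t); lra).
  induction k.
  - simpl. rewrite Rminus_diag, Rabs_R0. lra.
  - replace (t ^ S k - t' ^ S k) with (t * (t ^ k - t' ^ k) + t' ^ k * (t - t')) by (simpl; ring).
    eapply Rle_trans. apply Rabs_triang. rewrite !Rabs_mult.
    assert (Rabs t * Rabs (t ^ k - t' ^ k) <= T * (INR k * T ^ pred k * Rabs (t - t'))).
    { apply Rmult_le_compat; auto using Rabs_pos. }
    assert (Rabs (t' ^ k) * Rabs (t - t') <= T ^ k * Rabs (t - t')).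
    { apply Rmult_le_compat_r. apply Rabs_pos. rewrite <- RPow_abs. apply pow_incr. split; auto. apply Rabs_pos. }
    assert (E0 : T * (INR k * T ^ pred k) = INR k * T ^ k).
    { destruct k. simpl. ring. simpl pred. simpl. ring. }
    assert (T * (INR k * T ^ pred k * Rabs (t - t')) = INR k * T ^ k * Rabs (t - t'))
      by (rewrite <- E0; ring).
    replace (INR (S k) * T ^ pred (S k) * Rabs (t - t')) with
      (INR k * T ^ k * Rabs (t - t') + T ^ k * Rabs (t - t')) by (rewrite S_INR; simpl; ring).
    lra.
Qed.

Lemma expL_time p N G0 A t t' T phi B x : (p <> 0)%nat -> adj01 G0 A -> unif_cont p N G0 phi ->
  0 <= B -> (forall y, inK p N G0 y -> Rabs (phi y) <= B) -> inK p N G0 x ->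
  Rabs t <= T -> Rabs t' <= T ->
  Rabs (expL p N G0 A t phi x - expL p N G0 A t' phi x) <= Rabs (t - t') * (gen_bound p N G0 * B * exp (gen_bound p N G0 * T)).
Proof.
  intros Hp HA Hu HB H Hx Ht Ht'. set (C := gen_bound p N G0). assert (HC : 0 <= C) by apply gen_bound_nonneg.
  assert (HT : 0 <= T) by (pose proof (Rabs_pos t); lra).
  apply (cv_abs_bound (fun n => sum_f_R0 (exp_term p N G0 A t phi x) n - sum_f_R0 (exp_term p N G0 A t' phi x) n)).
  apply CV_minus; apply expL_cv; auto.
  intros n. rewrite <- minus_sum. eapply Rle_trans. apply Rsum_abs.
  apply Rle_trans with (sum_f_R0 (fun k => Rabs (t - t') * B * (INR k * T ^ pred k * C ^ k / INR (fact k))) n).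
  { apply sum_Rle. intros k _. unfold exp_term. rewrite <- Rmult_minus_distr_r.
    unfold Rdiv. rewrite <- Rmult_minus_distr_r. rewrite !Rabs_mult, Rabs_inv.
    rewrite (Rabs_right (INR (fact k))) by (left; apply INR_fact_lt_0).
    pose proof (pow_diff_le t t' T k Ht Ht').
    pose proof (Lpow_bound p N G0 A k phi B x Hp HA Hu HB H Hx).
    assert (0 <= / INR (fact k)) by (left; apply Rinv_0_lt_compat, INR_fact_lt_0).
    replace (Rabs (t - t') * B * (INR k * T ^ pred k * C ^ k * / INR (fact k))) with
      (INR k * T ^ pred k * Rabs (t - t') * / INR (fact k) * (C ^ k * B)) by ring.
    apply Rmult_le_compat; auto using Rabs_pos.
    apply Rmult_le_pos; auto using Rabs_pos. apply Rmult_le_compat_r; auto. }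
  rewrite sum_scal_l.
  replace (Rabs (t - t') * (C * B * exp (C * T))) with (Rabs (t - t') * B * (C * exp (C * T))) by ring.
  apply Rmult_le_compat_l. apply Rmult_le_pos; auto using Rabs_pos.
  destruct n.
  - simpl. rewrite Rmult_0_l, Rmult_0_l. unfold Rdiv. rewrite Rmult_0_l.
    apply Rmult_le_pos; auto. left; apply exp_pos.
  - rewrite decomp_sum by lia. simpl pred. simpl INR at 1. rewrite Rmult_0_l, Rmult_0_l.
    unfold Rdiv at 1. rewrite Rmult_0_l, Rplus_0_l.
    rewrite (sum_eq _ (fun j => C * ((C * T) ^ j / INR (fact j)))).
    + rewrite sum_scal_l. apply Rmult_le_compat_l; auto. apply exp_partial_le. apply Rmult_le_pos; auto.
    + intros j _. rewrite fact_simpl, mult_INR. simpl pred.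
      assert (0 < INR (fact j)) by apply INR_fact_lt_0. assert (0 < INR (S j)) by (apply lt_0_INR; lia).
      rewrite Rpow_mult_distr. simpl pow. field. lra.
Qed.

Lemma nat_large d : 0 < d -> exists n0, (0 < n0)%nat /\ forall n, (n0 <= n)%nat -> / INR n < d.
Proof.
  intros Hd. destruct (archimed (/ d)) as [H1 _].
  assert (Hpos : 0 < / d) by (apply Rinv_0_lt_compat; auto).
  exists (S (Z.to_nat (up (/ d)))). split; [lia|]. intros n Hn.
  assert (Hz : (0 <= up (/ d))%Z) by (apply le_IZR; lra).
  assert (INR (Z.to_nat (up (/ d))) = IZR (up (/ d))) by (rewrite INR_IZR_INZ, Z2Nat.id; auto).
  assert (HnR : INR (S (Z.to_nat (up (/ d)))) <= INR n) by (apply le_INR; auto).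
  rewrite S_INR in HnR.
  assert (/ d < INR n) by lra.
  apply Rinv_lt_contravar in H0. rewrite Rinv_inv in H0. auto. apply Rmult_lt_0_compat; lra.
Qed.

Definition rsum01 (g : R -> R) n := sumR n (fun k => g (INR k / INR n) * (1 / INR n)).

Definition int01 g := Lim (rsum01 g).

Definition unif_cont01 (g : R -> R) := forall e, 0 < e -> exists del, 0 < del /\ forall s s',
  0 <= s <= 1 -> 0 <= s' <= 1 -> Rabs (s - s') < del -> Rabs (g s - g s') <= e.

Lemma rsum01_avg g n : rsum01 g n = sumR n (fun k => g (INR k / INR n)) / INR n.
Proof.
  unfold rsum01. unfold Rdiv at 3. rewrite Rmult_comm, <- sumR_scal. apply sumR_ext.
  intros. unfold Rdiv. ring.
Qed.

Lemma pt_in k n : (k < n)%nat -> 0 <= INR k / INR n < 1.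
Proof.
  intros H. assert (0 < INR n) by (apply lt_0_INR; lia). assert (INR k < INR n) by (apply lt_INR; auto).
  pose proof (pos_INR k). split. apply Rmult_le_pos; auto. left; apply Rinv_0_lt_compat; auto.
  apply (Rmult_lt_reg_r (INR n)); auto. unfold Rdiv. rewrite Rmult_assoc, Rinv_l by lra. lra.
Qed.

Lemma rsum01_refine g e d n q : (0 < n)%nat -> (0 < q)%nat -> / INR n < d ->
  (forall s s', 0 <= s <= 1 -> 0 <= s' <= 1 -> Rabs (s - s') < d -> Rabs (g s - g s') <= e) ->
  Rabs (rsum01 g (n * q) - rsum01 g n) <= e.
Proof.
  intros Hn Hq Hd H. rewrite !rsum01_avg. apply avg_refine_high; auto.
  intros k j Hk Hj.
  assert (Hnq : (k * q + j < n * q)%nat) by nia.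
  apply H. split; [apply pt_in; auto|left; apply pt_in; auto].
  split; [apply pt_in; auto|left; apply pt_in; auto].
  assert (0 < INR n) by (apply lt_0_INR; lia). assert (0 < INR q) by (apply lt_0_INR; lia).
  assert (INR j < INR q) by (apply lt_INR; auto). pose proof (pos_INR j).
  rewrite plus_INR, !mult_INR.
  replace ((INR k * INR q + INR j) / (INR n * INR q) - INR k / INR n) with (INR j / (INR n * INR q))
    by (field; lra).
  rewrite Rabs_right. 2: { apply Rle_ge. apply Rmult_le_pos; auto. left; apply Rinv_0_lt_compat; nra. }
  apply Rle_lt_trans with (/ INR n); auto.
  unfold Rdiv. apply (Rmult_le_reg_r (INR n * INR q)). nra.
  rewrite Rmult_assoc, Rinv_l by nra. field_simplify; lra.
Qed.

Lemma rsum01_cv g : unif_cont01 g -> Un_cv (rsum01 g) (int01 g).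
Proof.
  intros Hg. apply Lim_cauchy. intros e He.
  destruct (Hg (e / 3)) as [d [Hd H]]; [lra|].
  destruct (nat_large d Hd) as [n0 [Hn0 Hl]].
  exists n0. intros n m Hn Hm. unfold Rdist.
  assert (A1 := rsum01_refine g (e / 3) d n m ltac:(lia) ltac:(lia) (Hl n Hn) H).
  assert (A2 := rsum01_refine g (e / 3) d m n ltac:(lia) ltac:(lia) (Hl m Hm) H).
  rewrite Nat.mul_comm in A2.
  replace (rsum01 g n - rsum01 g m) with ((rsum01 g (n * m) - rsum01 g m) - (rsum01 g (n * m) - rsum01 g n)) by ring.
  eapply Rle_lt_trans. apply Rabs_sub_le. lra.
Qed.

Lemma RInt_int01 h t : unif_cont01 (fun s => h (t * s)) -> RInt h 0 t = t * int01 (fun s => h (t * s)).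
Proof.
  intros Hu. unfold RInt. rewrite (Lim_ext _ (fun n => t * rsum01 (fun s => h (t * s)) n)).
  - apply Lim_spec. apply cv_scal. apply rsum01_cv; auto.
  - intros n. unfold rsum01. rewrite <- sumR_scal. apply sumR_ext. intros k _.
    replace (0 + (t - 0) * INR k / INR n) with (t * (INR k / INR n)) by (unfold Rdiv; ring).
    unfold Rdiv. ring.
Qed.

Lemma RInt_ext h1 h2 t : 0 <= t -> (forall s, 0 <= s <= t -> h1 s = h2 s) -> RInt h1 0 t = RInt h2 0 t.
Proof.
  intros Ht H. unfold RInt. apply Lim_ext. intros n. apply sumR_ext. intros k Hk.
  rewrite H; auto. destruct (pt_in k n Hk).
  replace (0 + (t - 0) * INR k / INR n) with (t * (INR k / INR n)) by (unfold Rdiv; ring).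
  split. apply Rmult_le_pos; lra. rewrite <- (Rmult_1_r t) at 2. apply Rmult_le_compat_l; lra.
Qed.

Lemma RInt_diff h1 h2 t b C : 0 <= t -> unif_cont01 (fun s => h1 (t * s)) -> unif_cont01 (fun s => h2 (t * s)) ->
  (forall s, 0 <= s <= t -> Rabs (h1 s - h2 s) <= b s) ->
  (forall n, t * sumR n (fun k => b (t * (INR k / INR n)) * (1 / INR n)) <= C) ->
  Rabs (RInt h1 0 t - RInt h2 0 t) <= C.
Proof.
  intros Ht H1 H2 Hb HC. rewrite !RInt_int01 by auto.
  apply (cv_abs_bound (fun n => t * rsum01 (fun s => h1 (t * s)) n - t * rsum01 (fun s => h2 (t * s)) n)).
  apply CV_minus; apply cv_scal; apply rsum01_cv; auto.
  intros n. eapply Rle_trans. 2: apply (HC n).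
  rewrite <- Rmult_minus_distr_l, Rabs_mult, Rabs_right by lra. apply Rmult_le_compat_l; auto.
  unfold rsum01. rewrite <- sumR_minus. eapply Rle_trans. apply sumR_abs. apply sumR_le.
  intros k Hk. rewrite <- Rmult_minus_distr_r, Rabs_mult.
  destruct (pt_in k n Hk).
  assert (0 < INR n) by (apply lt_0_INR; lia).
  rewrite (Rabs_right (1 / INR n)). 2: { apply Rle_ge. unfold Rdiv. rewrite Rmult_1_l. left; apply Rinv_0_lt_compat; auto. }
  apply Rmult_le_compat_r. unfold Rdiv. rewrite Rmult_1_l. left; apply Rinv_0_lt_compat; auto.
  apply Hb. split. apply Rmult_le_pos; lra. rewrite <- (Rmult_1_r t) at 2. apply Rmult_le_compat_l; lra.
Qed.

Lemma rsum_const t B n : 0 <= t -> 0 <= B -> t * sumR n (fun k => B * (1 / INR n)) <= t * B.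
Proof.
  intros Ht HB. apply Rmult_le_compat_l; auto. rewrite sumR_const. destruct n.
  simpl. lra. assert (0 < INR (S n)) by (apply lt_0_INR; lia). right. field. lra.
Qed.

Lemma exp_INR_mult k x : exp (INR k * x) = exp x ^ k.
Proof.
  induction k. simpl. rewrite Rmult_0_l. apply exp_0.
  rewrite S_INR. replace ((INR k + 1) * x) with (INR k * x + x) by ring. rewrite exp_plus, IHk. simpl. ring.
Qed.

Lemma geom_sum q n : sumR n (fun k => q ^ k) * (q - 1) = q ^ n - 1.
Proof. induction n; simpl. ring. rewrite Rmult_plus_distr_r, IHn. ring. Qed.

Lemma rsum_exp t lam C0 n : 0 <= t -> 0 < lam -> 0 <= C0 ->
  t * sumR n (fun k => C0 * exp (lam * (t * (INR k / INR n))) * (1 / INR n)) <= C0 * exp (lam * t) / lam.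
Proof.
  intros Ht Hl HC.
  assert (Hpos : 0 <= C0 * exp (lam * t) / lam).
  { unfold Rdiv. apply Rmult_le_pos. apply Rmult_le_pos; auto. left; apply exp_pos. left; apply Rinv_0_lt_compat; auto. }
  destruct n. simpl. lra.
  destruct (Req_dec t 0) as [E|E].
  { subst. rewrite Rmult_0_l. auto. }
  set (n' := S n). assert (Hn : 0 < INR n') by (apply lt_0_INR; unfold n'; lia).
  set (h := t / INR n'). assert (Hh : 0 < h) by (unfold h; apply Rdiv_lt_0_compat; lra).
  set (q := exp (lam * h)).
  assert (Hq : 1 + lam * h <= q) by apply exp_ineq1_le.
  assert (Hq1 : 0 < q - 1) by nra.
  rewrite (sumR_ext _ _ (fun k => (C0 / INR n') * q ^ k)).
  2: { intros k _. unfold q. rewrite <- exp_INR_mult.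
       replace (INR k * (lam * h)) with (lam * (t * (INR k / INR n'))) by (unfold h, Rdiv; ring).
       unfold Rdiv; ring. }
  rewrite sumR_scal.
  assert (Hg := geom_sum q n').
  assert (Hqn : q ^ n' = exp (lam * t)).
  { unfold q. rewrite <- exp_INR_mult. f_equal. unfold h. field. lra. }
  assert (Hs : sumR n' (pow q) = (exp (lam * t) - 1) / (q - 1)).
  { apply (Rmult_eq_reg_r (q - 1)); [| lra]. unfold Rdiv. rewrite Rmult_assoc, Rinv_l, Rmult_1_r by lra.
    rewrite <- Hqn. exact Hg. }
  rewrite Hs.
  replace (t * (C0 / INR n' * ((exp (lam * t) - 1) / (q - 1)))) with
    (C0 * (exp (lam * t) - 1) * (h / (q - 1))) by (unfold h; field; lra).
  assert (h / (q - 1) <= / lam).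
  { apply (Rmult_le_reg_r (q - 1)); auto. unfold Rdiv. rewrite Rmult_assoc, Rinv_l by lra.
    apply (Rmult_le_reg_l lam); auto. rewrite Rmult_1_r, <- Rmult_assoc, Rinv_r by lra. lra. }
  pose proof (exp_pos (lam * t)).
  assert (1 <= exp (lam * t)). { pose proof (exp_ineq1_le (lam * t)). assert (0 <= lam * t) by nra. lra. }
  unfold Rdiv. apply Rle_trans with (C0 * (exp (lam * t) - 1) * / lam).
  apply Rmult_le_compat_l; auto. apply Rmult_le_pos; lra.
  apply Rmult_le_compat_r. left; apply Rinv_0_lt_compat; auto. nra.
Qed.

Lemma exp_le x y : x <= y -> exp x <= exp y.
Proof. intros [H|H]. left; apply exp_increasing; auto. subst; lra. Qed.

Lemma int01_diff g1 g2 B : unif_cont01 g1 -> unif_cont01 g2 -> 0 <= B ->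
  (forall s, 0 <= s <= 1 -> Rabs (g1 s - g2 s) <= B) -> Rabs (int01 g1 - int01 g2) <= B.
Proof.
  intros H1 H2 HB H. apply (cv_abs_bound (fun n => rsum01 g1 n - rsum01 g2 n)).
  apply CV_minus; apply rsum01_cv; auto.
  intros n. unfold rsum01. rewrite <- sumR_minus. eapply Rle_trans. apply sumR_abs.
  apply Rle_trans with (sumR n (fun _ => B * (1 / INR n))).
  - apply sumR_le. intros k Hk. rewrite <- Rmult_minus_distr_r, Rabs_mult.
    assert (0 < INR n) by (apply lt_0_INR; lia).
    assert (0 < 1 / INR n) by (unfold Rdiv; rewrite Rmult_1_l; apply Rinv_0_lt_compat; auto).
    rewrite (Rabs_right (1 / INR n)) by lra. apply Rmult_le_compat_r; [lra|].
    apply H. destruct (pt_in k n Hk). lra.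
  - rewrite sumR_const. destruct n. simpl; lra.
    assert (0 < INR (S n)) by (apply lt_0_INR; lia). right. field. lra.
Qed.

Lemma unif_cont01_zero : unif_cont01 (fun _ => 0).
Proof. intros e He. exists 1. split; [lra|]. intros. rewrite Rminus_diag, Rabs_R0. lra. Qed.

Lemma int01_zero : int01 (fun _ => 0) = 0.
Proof.
  unfold int01. rewrite (Lim_ext _ (fun _ => 0)). apply Lim_const.
  intros n. unfold rsum01. rewrite (sumR_ext _ _ (fun _ => 0)). rewrite sumR_const. ring. intros; ring.
Qed.

Lemma int01_bound g B : unif_cont01 g -> 0 <= B -> (forall s, 0 <= s <= 1 -> Rabs (g s) <= B) -> Rabs (int01 g) <= B.
Proof.
  intros Hg HB H. rewrite <- (Rminus_0_r (int01 g)), <- int01_zero. apply int01_diff; auto.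
  apply unif_cont01_zero. intros. rewrite Rminus_0_r; auto.
Qed.

Definition time_equicont p N G0 (G : R -> digseq -> R) (T : R) := forall e, 0 < e -> exists del, 0 < del /\
  forall s s', 0 <= s <= T -> 0 <= s' <= T -> Rabs (s - s') < del ->
    forall x, inK p N G0 x -> Rabs (G s x - G s' x) <= e.

Definition admissible p N G0 (G : R -> digseq -> R) (T B : R) :=
  0 <= B /\ (forall s, 0 <= s <= T -> unif_cont p N G0 (G s)) /\
  (forall s, 0 <= s <= T -> forall x, inK p N G0 x -> Rabs (G s x) <= B) /\ time_equicont p N G0 G T.

Definition duhamel p N G0 A (c : R) (G : R -> digseq -> R) (t : R) (x : digseq) :=
  RInt (fun s => expL p N G0 A (c * (t - s)) (G s) x) 0 t.

Definition growth p N G0 c T := exp (gen_bound p N G0 * (c * T)).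

Lemma growth_ge1 p N G0 c T : 0 <= c -> 0 <= T -> 1 <= growth p N G0 c T.
Proof.
  intros. unfold growth. rewrite <- exp_0. apply exp_le. apply Rmult_le_pos. apply gen_bound_nonneg.
  apply Rmult_le_pos; auto.
Qed.

Lemma exp_arg_le p N G0 c T a : 0 <= c -> Rabs a <= c * T -> exp (gen_bound p N G0 * Rabs a) <= growth p N G0 c T.
Proof. intros. unfold growth. apply exp_le. apply Rmult_le_compat_l; auto. apply gen_bound_nonneg. Qed.

Lemma expL_forcing_equicont p N G0 A c G T B : (p <> 0)%nat -> adj01 G0 A -> 0 <= c ->
  admissible p N G0 G T B -> forall e, 0 < e -> exists del, 0 < del /\
  forall r r' s s' x, 0 <= r <= T -> 0 <= r' <= T -> 0 <= s <= T -> 0 <= s' <= T ->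
    Rabs (r - r') < del -> Rabs (s - s') < del -> inK p N G0 x ->
    Rabs (expL p N G0 A (c * r) (G s) x - expL p N G0 A (c * r') (G s') x) <= e.
Proof.
  intros Hp HA Hc [HB [HU [HBd HT]]] e He.
  set (E := growth p N G0 c T). set (C := gen_bound p N G0).
  assert (HC : 0 <= C) by apply gen_bound_nonneg.
  assert (HE : 0 < E) by apply exp_pos.
  destruct (HT (e / (2 * E))) as [d1 [Hd1 H1]]; [apply Rdiv_lt_0_compat; lra|].
  set (K := c * C * B * E + 1). assert (HK : 0 < K) by (unfold K; assert (0 <= c * C * B * E) by solve_nonneg; lra).
  exists (Rmin d1 (e / (2 * K))). split; [apply Rmin_glb_lt; [lra|apply Rdiv_lt_0_compat; lra]|].
  intros r r' s s' x Hr Hr' Hs Hs' Hdr Hds Hx.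
  assert (Hds1 : Rabs (s - s') < d1) by (eapply Rlt_le_trans; [apply Hds|apply Rmin_l]).
  assert (Hdr2 : Rabs (r - r') < e / (2 * K)) by (eapply Rlt_le_trans; [apply Hdr|apply Rmin_r]).
  assert (Hcr : forall q, 0 <= q <= T -> Rabs (c * q) <= c * T).
  { intros q Hq. rewrite Rabs_right by (apply Rle_ge; nra). apply Rmult_le_compat_l; lra. }
  assert (A1 : Rabs (expL p N G0 A (c * r) (G s) x - expL p N G0 A (c * r) (G s') x) <= e / 2).
  { eapply Rle_trans.
    - apply (expL_diff p N G0 A (c * r) (G s) (G s') (e / (2 * E))); auto.
      left; apply Rdiv_lt_0_compat; lra.
    - apply Rle_trans with (e / (2 * E) * E); [|right; field; lra].
      apply Rmult_le_compat_l; [left; apply Rdiv_lt_0_compat; lra|].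
      apply exp_arg_le; auto. }
  assert (A2 : Rabs (expL p N G0 A (c * r) (G s') x - expL p N G0 A (c * r') (G s') x) <= e / 2).
  { eapply Rle_trans; [apply (expL_time p N G0 A (c * r) (c * r') (c * T) (G s') B x); auto|].
    change (gen_bound p N G0) with C. change (exp (C * (c * T))) with E.
    replace (c * r - c * r') with (c * (r - r')) by ring. rewrite Rabs_mult, (Rabs_right c) by lra.
    apply Rle_trans with (K * Rabs (r - r')).
    - unfold K. pose proof (Rabs_pos (r - r')).
      replace (c * Rabs (r - r') * (C * B * E)) with (c * C * B * E * Rabs (r - r')) by ring. lra.
    - apply Rle_trans with (K * (e / (2 * K))); [apply Rmult_le_compat_l; lra|right; field; lra]. }
  replace (expL p N G0 A (c * r) (G s) x - expL p N G0 A (c * r') (G s') x) with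
    ((expL p N G0 A (c * r) (G s) x - expL p N G0 A (c * r) (G s') x) +
     (expL p N G0 A (c * r) (G s') x - expL p N G0 A (c * r') (G s') x)) by ring.
  eapply Rle_trans; [apply Rabs_triang|lra].
Qed.

Lemma duhamel_integrand_unif_cont01 p N G0 A c G T B t x : (p <> 0)%nat -> adj01 G0 A -> 0 <= c -> 0 <= t <= T ->
  admissible p N G0 G T B -> inK p N G0 x ->
  unif_cont01 (fun s => expL p N G0 A (c * (t - t * s)) (G (t * s)) x).
Proof.
  intros Hp HA Hc Ht HG Hx e He.
  destruct (expL_forcing_equicont p N G0 A c G T B Hp HA Hc HG e He) as [del [Hdel H]].
  exists (del / (T + 1)). split; [apply Rdiv_lt_0_compat; lra|].
  intros s s' Hs Hs' Hss.
  assert (Hts : Rabs (t * s - t * s') < del).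
  { rewrite <- Rmult_minus_distr_l, Rabs_mult, (Rabs_right t) by lra.
    apply Rle_lt_trans with (T * (del / (T + 1))).
    - apply Rmult_le_compat; try lra; apply Rabs_pos.
    - apply (Rmult_lt_reg_r (T + 1)); [lra|].
      replace (T * (del / (T + 1)) * (T + 1)) with (T * del) by (field; lra). nra. }
  apply H; auto; try (split; nra).
  replace (t - t * s - (t - t * s')) with (- (t * s - t * s')) by ring. rewrite Rabs_Ropp. auto.
Qed.

Lemma admissible_zero p N G0 T : admissible p N G0 (fun _ _ => 0) T 0.
Proof.
  split; [lra|]. split; [|split].
  - intros s _. apply (locconst_unif_cont p N G0 N); auto. intros ? ? ? ? ?; auto.
  - intros. rewrite Rabs_R0. lra.
  - intros e He. exists 1. split; [lra|]. intros. rewrite Rminus_diag, Rabs_R0. lra.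
Qed.

Lemma duhamel_zero p N G0 A c t x : (p <> 0)%nat -> 0 <= t -> inK p N G0 x -> duhamel p N G0 A c (fun _ _ => 0) t x = 0.
Proof.
  intros Hp Ht Hx. unfold duhamel. rewrite (RInt_ext _ (fun _ => 0)); auto.
  unfold RInt. rewrite (Lim_ext _ (fun _ => 0)). apply Lim_const.
  intros n. rewrite (sumR_ext _ _ (fun _ => 0)). rewrite sumR_const. ring. intros; ring.
  intros s _. apply expL_zero; auto.
Qed.

Lemma duhamel_diff p N G0 A c G1 G2 T B1 B2 t x b Cb : (p <> 0)%nat -> adj01 G0 A -> 0 <= c -> 0 <= t <= T ->
  admissible p N G0 G1 T B1 -> admissible p N G0 G2 T B2 -> inK p N G0 x ->
  (forall s, 0 <= s <= t -> 0 <= b s /\ forall y, inK p N G0 y -> Rabs (G1 s y - G2 s y) <= b s) ->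
  (forall n, t * sumR n (fun k => b (t * (INR k / INR n)) * (1 / INR n)) <= Cb) ->
  Rabs (duhamel p N G0 A c G1 t x - duhamel p N G0 A c G2 t x) <= growth p N G0 c T * Cb.
Proof.
  intros Hp HA Hc Ht H1 H2 Hx Hb HC. unfold duhamel.
  apply (RInt_diff _ _ t (fun s => growth p N G0 c T * b s)); try lra.
  - apply (duhamel_integrand_unif_cont01 p N G0 A c G1 T B1); auto.
  - apply (duhamel_integrand_unif_cont01 p N G0 A c G2 T B2); auto.
  - intros s Hs. destruct (Hb s Hs) as [Hb0 Hb1].
    destruct H1 as [_ [HU1 _]]. destruct H2 as [_ [HU2 _]].
    eapply Rle_trans. apply expL_diff; auto; try apply HU1; try apply HU2; lra.
    rewrite Rmult_comm. apply Rmult_le_compat_r; auto. apply exp_arg_le; auto.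
    rewrite Rabs_right by (apply Rle_ge, Rmult_le_pos; lra). apply Rmult_le_compat_l; lra.
  - intros n. rewrite (sumR_ext _ _ (fun k => growth p N G0 c T * (b (t * (INR k / INR n)) * (1 / INR n)))).
    2: intros; ring. rewrite sumR_scal.
    replace (t * (growth p N G0 c T * sumR n (fun k => b (t * (INR k / INR n)) * (1 / INR n)))) with
      (growth p N G0 c T * (t * sumR n (fun k => b (t * (INR k / INR n)) * (1 / INR n)))) by ring.
    apply Rmult_le_compat_l; auto. pose proof (growth_ge1 p N G0 c T Hc). lra.
Qed.

Lemma duhamel_bound p N G0 A c G T B t x : (p <> 0)%nat -> adj01 G0 A -> 0 <= c -> 0 <= t <= T ->
  admissible p N G0 G T B -> inK p N G0 x ->
  Rabs (duhamel p N G0 A c G t x) <= growth p N G0 c T * (t * B).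
Proof.
  intros Hp HA Hc Ht HG Hx. rewrite <- (Rminus_0_r (duhamel p N G0 A c G t x)).
  rewrite <- (duhamel_zero p N G0 A c t x) by (auto; lra).
  apply (duhamel_diff p N G0 A c G (fun _ _ => 0) T B 0 t x (fun _ => B)); auto using admissible_zero.
  - intros s Hs. destruct HG as [HB [_ [HBd _]]]. split; auto. intros y Hy. rewrite Rminus_0_r.
    apply HBd; auto. lra.
  - intros n. apply rsum_const. lra. apply HG.
Qed.

Lemma expL_forcing_bound p N G0 A c G T B r s x : (p <> 0)%nat -> adj01 G0 A -> 0 <= c ->
  admissible p N G0 G T B -> 0 <= r <= T -> 0 <= s <= T -> inK p N G0 x ->
  Rabs (expL p N G0 A (c * r) (G s) x) <= growth p N G0 c T * B.
Proof.
  intros Hp HA Hc [HB [HU [HBd _]]] Hr Hs Hx.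
  eapply Rle_trans; [apply (expL_bound p N G0 A (c * r) (G s) B x); auto|].
  rewrite Rmult_comm. apply Rmult_le_compat_r; auto. apply exp_arg_le; auto.
  rewrite Rabs_right by (apply Rle_ge; nra). apply Rmult_le_compat_l; lra.
Qed.

Lemma duhamel_time_equicont p N G0 A c G T B : (p <> 0)%nat -> adj01 G0 A -> 0 <= c -> 0 <= T ->
  admissible p N G0 G T B ->
  time_equicont p N G0 (duhamel p N G0 A c G) T.
Proof.
  intros Hp HA Hc HT0 HG e He.
  set (E := growth p N G0 c T). assert (HE : 1 <= E) by (apply growth_ge1; lra).
  assert (HB : 0 <= B) by apply HG.
  destruct (expL_forcing_equicont p N G0 A c G T B Hp HA Hc HG (e / (2 * (T + 1))))
    as [del [Hdel Hq]]; [apply Rdiv_lt_0_compat; lra|].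
  set (K := E * B + 1). assert (HK : 0 < K) by (unfold K; nra).
  exists (Rmin del (e / (2 * K))). split; [apply Rmin_glb_lt; [lra|apply Rdiv_lt_0_compat; lra]|].
  intros t t' Ht Ht' Hd x Hx.
  assert (Hd1 : Rabs (t - t') < del) by (eapply Rlt_le_trans; [apply Hd|apply Rmin_l]).
  assert (Hd2 : Rabs (t - t') < e / (2 * K)) by (eapply Rlt_le_trans; [apply Hd|apply Rmin_r]).
  unfold duhamel. rewrite !RInt_int01 by (eapply duhamel_integrand_unif_cont01; eauto).
  set (h := fun s => expL p N G0 A (c * (t - t * s)) (G (t * s)) x).
  set (h' := fun s => expL p N G0 A (c * (t' - t' * s)) (G (t' * s)) x).
  assert (Uh : unif_cont01 h) by (eapply duhamel_integrand_unif_cont01; eauto).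
  assert (Uh' : unif_cont01 h') by (eapply duhamel_integrand_unif_cont01; eauto).
  assert (Bh : Rabs (int01 h) <= E * B).
  { apply int01_bound; auto; [nra|]. intros s Hs. unfold h.
    apply (expL_forcing_bound p N G0 A c G T B); auto; split; nra. }
  assert (Dh : Rabs (int01 h - int01 h') <= e / (2 * (T + 1))).
  { apply int01_diff; auto; [left; apply Rdiv_lt_0_compat; lra|]. intros s Hs. unfold h, h'.
    apply Hq; auto; try (split; nra).
    - replace (t - t * s - (t' - t' * s)) with ((1 - s) * (t - t')) by ring.
      rewrite Rabs_mult, (Rabs_right (1 - s)) by lra. pose proof (Rabs_pos (t - t')). nra.
    - rewrite <- Rmult_minus_distr_r, Rabs_mult, (Rabs_right s) by lra.
      pose proof (Rabs_pos (t - t')). nra. }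
  replace (t * int01 h - t' * int01 h') with ((t - t') * int01 h + t' * (int01 h - int01 h')) by ring.
  eapply Rle_trans; [apply Rabs_triang|]. rewrite !Rabs_mult, (Rabs_right t') by lra.
  assert (X1 : Rabs (t - t') * Rabs (int01 h) <= e / 2).
  { apply Rle_trans with (e / (2 * K) * K); [|right; field; lra].
    apply Rmult_le_compat; [apply Rabs_pos|apply Rabs_pos|lra|unfold K; lra]. }
  assert (X2 : t' * Rabs (int01 h - int01 h') <= e / 2).
  { apply Rle_trans with (T * (e / (2 * (T + 1)))).
    - apply Rmult_le_compat; try lra; apply Rabs_pos.
    - replace (T * (e / (2 * (T + 1)))) with (e / 2 - e / (2 * (T + 1))) by (field; lra).
      assert (0 < e / (2 * (T + 1))) by (apply Rdiv_lt_0_compat; lra). lra. }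
  lra.
Qed.

Definition lipschitz (F : R -> R -> R) L := forall a b a' b', Rabs (F a b - F a' b') <= L * (Rabs (a - a') + Rabs (b - b')).

Definition nemytskii (F : R -> R -> R) (U V : R -> digseq -> R) := fun s y => F (U s y) (V s y).

Definition regular_pair p N G0 (U V : R -> digseq -> R) T B :=
  0 <= B /\ (forall s, 0 <= s <= T -> unif_cont p N G0 (U s) /\ unif_cont p N G0 (V s)) /\
  (forall s, 0 <= s <= T -> forall x, inK p N G0 x -> Rabs (U s x) <= B /\ Rabs (V s x) <= B) /\
  time_equicont p N G0 U T /\ time_equicont p N G0 V T.

Lemma lip_small L e : 0 <= L -> 0 < e -> L * (e / (2 * L + 1) + e / (2 * L + 1)) <= e.
Proof.
  intros HL He. replace (L * (e / (2 * L + 1) + e / (2 * L + 1))) with (e - e / (2 * L + 1)) by (field; lra).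
  assert (0 < e / (2 * L + 1)) by (apply Rdiv_lt_0_compat; lra). lra.
Qed.

Lemma nemytskii_admissible p N G0 F L U V T B : (p <> 0)%nat -> 0 <= L -> lipschitz F L -> regular_pair p N G0 U V T B ->
  admissible p N G0 (nemytskii F U V) T (Rabs (F 0 0) + L * (2 * B)).
Proof.
  intros Hp HL HF [HB [HU [HBd [HTU HTV]]]]. split; [|split; [|split]].
  - pose proof (Rabs_pos (F 0 0)). assert (0 <= L * (2 * B)) by solve_nonneg. lra.
  - intros s Hs e He. destruct (HU s Hs) as [H1 H2].
    assert (He' : 0 < e / (2 * L + 1)) by (apply Rdiv_lt_0_compat; lra).
    destruct (H1 _ He') as [m1 [Hm1 Hu1]]. destruct (H2 _ He') as [m2 [Hm2 Hu2]].
    exists (Nat.max m1 m2). split; [lia|]. intros x y Hx Hy E. unfold nemytskii.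
    eapply Rle_trans. apply HF. eapply Rle_trans. 2: apply (lip_small L e); auto.
    apply Rmult_le_compat_l; auto. apply Rplus_le_compat.
    apply (unif_cont_refine p N G0 (U s) _ m1 (Nat.max m1 m2)); auto; lia.
    apply (unif_cont_refine p N G0 (V s) _ m2 (Nat.max m1 m2)); auto; lia.
  - intros s Hs x Hx. unfold nemytskii. destruct (HBd s Hs x Hx) as [B1 B2].
    assert (H := HF (U s x) (V s x) 0 0). rewrite !Rminus_0_r in H.
    replace (F (U s x) (V s x)) with ((F (U s x) (V s x) - F 0 0) + F 0 0) by ring.
    eapply Rle_trans. apply Rabs_triang.
    assert (L * (Rabs (U s x) + Rabs (V s x)) <= L * (2 * B)) by (apply Rmult_le_compat_l; lra). lra.
  - intros e He. assert (He' : 0 < e / (2 * L + 1)) by (apply Rdiv_lt_0_compat; lra).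
    destruct (HTU _ He') as [d1 [Hd1 H1]]. destruct (HTV _ He') as [d2 [Hd2 H2]].
    exists (Rmin d1 d2). split. apply Rmin_glb_lt; auto.
    intros s s' Hs Hs' Hd x Hx. unfold nemytskii.
    eapply Rle_trans. apply HF. eapply Rle_trans. 2: apply (lip_small L e); auto.
    apply Rmult_le_compat_l; auto. apply Rplus_le_compat.
    apply H1; auto. eapply Rlt_le_trans. apply Hd. apply Rmin_l.
    apply H2; auto. eapply Rlt_le_trans. apply Hd. apply Rmin_r.
Qed.

(* The Duhamel maps whose fixed points are the mild solutions:
   u |-> e^{eps t L} w + int_0^t e^{eps (t-s) L} F(U, V)(s) ds ... *)
Definition mild_map_u p N G0 A eps (F : R -> R -> R) (w : digseq -> R) U V t x :=
  expL p N G0 A (eps * t) w x + duhamel p N G0 A eps (nemytskii F U V) t x.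

Definition mild_map_v p N G0 A eps d (Gf : R -> R -> R) (z : digseq -> R) U V t x :=
  expL p N G0 A (eps * d * t) z x + duhamel p N G0 A (eps * d) (nemytskii Gf U V) t x.

Definition solves_on p N G0 A eps d (F Gf : R -> R -> R) (w z : digseq -> R) (U V : R -> digseq -> R) (T : R) :=
  forall t, 0 <= t <= T -> forall x, inK p N G0 x ->
    U t x = mild_map_u p N G0 A eps F w U V t x /\ V t x = mild_map_v p N G0 A eps d Gf z U V t x.

Definition growth_uv p N G0 eps d T := growth p N G0 (eps + eps * d) T.

(* The rate lam of the exponential weight e^{-lam s} making the Duhamel maps a contraction. *)
Definition weight_rate p N G0 eps d T L := 4 * growth_uv p N G0 eps d T * L + 1.

Lemma growth_mono p N G0 c c' T : 0 <= c -> c <= c' -> 0 <= T -> growth p N G0 c T <= growth p N G0 c' T.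
Proof. intros. unfold growth. apply exp_le. apply Rmult_le_compat_l. apply gen_bound_nonneg. apply Rmult_le_compat_r; lra. Qed.

Lemma duhamel_nemytskii_diff p N G0 A c F L lam T U1 V1 U2 V2 B1 B2 Q t x :
  (p <> 0)%nat -> adj01 G0 A -> 0 <= c -> 0 <= L -> 0 < lam -> lipschitz F L ->
  regular_pair p N G0 U1 V1 T B1 -> regular_pair p N G0 U2 V2 T B2 -> 0 <= Q ->
  (forall s, 0 <= s <= T -> forall y, inK p N G0 y ->
     Rabs (U1 s y - U2 s y) + Rabs (V1 s y - V2 s y) <= Q * exp (lam * s)) ->
  0 <= t <= T -> inK p N G0 x ->
  Rabs (duhamel p N G0 A c (nemytskii F U1 V1) t x - duhamel p N G0 A c (nemytskii F U2 V2) t x)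
  <= growth p N G0 c T * (L * Q * exp (lam * t) / lam).
Proof.
  intros Hp HA Hc HL Hlam HF P1 P2 HQ HD Ht Hx.
  apply (duhamel_diff p N G0 A c _ _ T _ _ t x (fun s => L * (Q * exp (lam * s))) _ Hp HA Hc Ht
    (nemytskii_admissible p N G0 F L U1 V1 T B1 Hp HL HF P1)
    (nemytskii_admissible p N G0 F L U2 V2 T B2 Hp HL HF P2) Hx).
  - intros s Hs. split; [pose proof (exp_pos (lam * s)); solve_nonneg|].
    intros y Hy. unfold nemytskii. eapply Rle_trans; [apply HF|].
    apply Rmult_le_compat_l; auto. apply HD; auto. lra.
  - intros n. rewrite (sumR_ext _ _ (fun k => (L * Q) * exp (lam * (t * (INR k / INR n))) * (1 / INR n)))
      by (intros; ring).
    apply rsum_exp; try lra. solve_nonneg.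
Qed.

(* The basic contraction-type estimate for the pair of Duhamel maps in the
   weighted norm sup_s e^{-lam s}|.|: the weight rate lam is chosen so large that
   the nonlinear part contributes at most half of the input difference. *)
Lemma mild_map_contraction p N G0 A eps d F Gf L T U1 V1 U2 V2 B1 B2 w1 w2 z1 z2 a0 Q t x :
  (p <> 0)%nat -> adj01 G0 A -> 0 < eps -> 0 < d -> 0 <= T -> 0 <= L -> lipschitz F L -> lipschitz Gf L ->
  regular_pair p N G0 U1 V1 T B1 -> regular_pair p N G0 U2 V2 T B2 ->
  unif_cont p N G0 w1 -> unif_cont p N G0 w2 -> unif_cont p N G0 z1 -> unif_cont p N G0 z2 -> 0 <= a0 ->
  (forall y, inK p N G0 y -> Rabs (w1 y - w2 y) <= a0 /\ Rabs (z1 y - z2 y) <= a0) ->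
  0 <= Q -> (forall s, 0 <= s <= T -> forall y, inK p N G0 y ->
     Rabs (U1 s y - U2 s y) + Rabs (V1 s y - V2 s y) <= Q * exp (weight_rate p N G0 eps d T L * s)) ->
  0 <= t <= T -> inK p N G0 x ->
  Rabs (mild_map_u p N G0 A eps F w1 U1 V1 t x - mild_map_u p N G0 A eps F w2 U2 V2 t x) +
  Rabs (mild_map_v p N G0 A eps d Gf z1 U1 V1 t x - mild_map_v p N G0 A eps d Gf z2 U2 V2 t x)
  <= 2 * growth_uv p N G0 eps d T * a0 + Q / 2 * exp (weight_rate p N G0 eps d T L * t).
Proof.
  intros Hp HA He Hd HT HL HF HG P1 P2 Hw1 Hw2 Hz1 Hz2 Ha0 Hw HQ HD Ht Hx.
  set (E := growth_uv p N G0 eps d T). set (lam := weight_rate p N G0 eps d T L).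
  assert (Hed : 0 <= eps * d) by nra.
  assert (HE1 : growth p N G0 eps T <= E) by (apply growth_mono; nra).
  assert (HE2 : growth p N G0 (eps * d) T <= E) by (apply growth_mono; nra).
  assert (HE0 : 1 <= growth p N G0 eps T) by (apply growth_ge1; lra).
  assert (Hlam : 0 < lam) by (unfold lam, weight_rate; fold E; nra).
  assert (Hexp : forall c, 0 <= c -> exp (gen_bound p N G0 * Rabs (c * t)) <= growth p N G0 c T).
  { intros c Hc. apply exp_arg_le; auto. rewrite Rabs_right by (apply Rle_ge; nra). apply Rmult_le_compat_l; lra. }
  set (Rn := L * Q * exp (lam * t) / lam).
  assert (HR : 0 <= Rn).
  { unfold Rn, Rdiv. pose proof (exp_pos (lam * t)). assert (0 < / lam) by (apply Rinv_0_lt_compat; auto). solve_nonneg. }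
  assert (A1 : Rabs (expL p N G0 A (eps * t) w1 x - expL p N G0 A (eps * t) w2 x) <= a0 * E).
  { eapply Rle_trans; [apply (expL_diff p N G0 A (eps * t) w1 w2 a0 x); auto; apply Hw|].
    apply Rmult_le_compat_l; auto. eapply Rle_trans; [apply Hexp|]; lra. }
  assert (A2 : Rabs (expL p N G0 A (eps * d * t) z1 x - expL p N G0 A (eps * d * t) z2 x) <= a0 * E).
  { eapply Rle_trans; [apply (expL_diff p N G0 A (eps * d * t) z1 z2 a0 x); auto; apply Hw|].
    apply Rmult_le_compat_l; auto. eapply Rle_trans; [apply Hexp|]; lra. }
  assert (A3 : Rabs (duhamel p N G0 A eps (nemytskii F U1 V1) t x - duhamel p N G0 A eps (nemytskii F U2 V2) t x)
               <= E * Rn).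
  { eapply Rle_trans; [apply (duhamel_nemytskii_diff p N G0 A eps F L lam T U1 V1 U2 V2 B1 B2 Q t x); auto; lra|].
    apply Rmult_le_compat_r; auto. }
  assert (A4 : Rabs (duhamel p N G0 A (eps * d) (nemytskii Gf U1 V1) t x
                     - duhamel p N G0 A (eps * d) (nemytskii Gf U2 V2) t x) <= E * Rn).
  { eapply Rle_trans; [apply (duhamel_nemytskii_diff p N G0 A (eps * d) Gf L lam T U1 V1 U2 V2 B1 B2 Q t x); auto|].
    apply Rmult_le_compat_r; auto. }
  assert (A5 : 2 * (E * Rn) <= Q / 2 * exp (lam * t)).
  { unfold Rn. pose proof (exp_pos (lam * t)).
    replace (2 * (E * (L * Q * exp (lam * t) / lam))) with ((4 * E * L) / lam * (Q / 2 * exp (lam * t))) by (field; lra).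
    rewrite <- (Rmult_1_l (Q / 2 * exp (lam * t))) at 2. apply Rmult_le_compat_r; [solve_nonneg|].
    unfold lam, weight_rate. fold E. assert (0 <= E * L) by nra. apply (Rmult_le_reg_r (4 * E * L + 1)); [lra|].
    unfold Rdiv. rewrite Rmult_assoc, Rinv_l by lra. lra. }
  unfold mild_map_u, mild_map_v.
  set (a1 := expL p N G0 A (eps * t) w1 x) in *. set (a2 := expL p N G0 A (eps * t) w2 x) in *.
  set (b1 := expL p N G0 A (eps * d * t) z1 x) in *. set (b2 := expL p N G0 A (eps * d * t) z2 x) in *.
  set (i1 := duhamel p N G0 A eps (nemytskii F U1 V1) t x) in *. set (i2 := duhamel p N G0 A eps (nemytskii F U2 V2) t x) in *.
  set (j1 := duhamel p N G0 A (eps * d) (nemytskii Gf U1 V1) t x) in *.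
  set (j2 := duhamel p N G0 A (eps * d) (nemytskii Gf U2 V2) t x) in *.
  replace (a1 + i1 - (a2 + i2)) with ((a1 - a2) + (i1 - i2)) by ring.
  replace (b1 + j1 - (b2 + j2)) with ((b1 - b2) + (j1 - j2)) by ring.
  pose proof (Rabs_triang (a1 - a2) (i1 - i2)). pose proof (Rabs_triang (b1 - b2) (j1 - j2)).
  lra.
Qed.

Lemma INR_le_pow2 n : INR n <= 2 ^ n.
Proof. induction n. simpl; lra. rewrite S_INR. simpl. assert (1 <= 2 ^ n) by (apply pow_R1_Rle; lra). lra. Qed.

Lemma lim_pow2 z w C : 0 <= C -> (forall n, z <= w + C / 2 ^ n) -> z <= w.
Proof.
  intros HC H. apply Rnot_lt_le. intros Hlt.
  destruct (nat_large ((z - w) / (C + 1))) as [n0 [Hn0 Hl]]. apply Rdiv_lt_0_compat; lra.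
  specialize (H n0). specialize (Hl n0 (Nat.le_refl _)).
  assert (Hp : 0 < INR n0) by (apply lt_0_INR; lia).
  assert (H2 : INR n0 <= 2 ^ n0) by apply INR_le_pow2.
  assert (C / 2 ^ n0 <= (C + 1) / INR n0).
  { unfold Rdiv. apply Rmult_le_compat; try lra. left; apply Rinv_0_lt_compat; lra.
    apply Rinv_le_contravar; lra. }
  assert ((C + 1) / INR n0 < z - w).
  { apply (Rmult_lt_reg_r (/ (C + 1))). apply Rinv_0_lt_compat; lra.
    replace ((C + 1) / INR n0 * / (C + 1)) with (/ INR n0) by (field; lra). exact Hl. }
  lra.
Qed.

Definition stability_const p N G0 eps d T L := 4 * growth_uv p N G0 eps d T * exp (weight_rate p N G0 eps d T L * T).

(* Iterating the contraction estimate gives the bound (2 a + Q0/2^n) e^{lam s} for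
   every n, with a = 2 growth_uv a0. *)
Lemma mild_map_stability p N G0 A eps d F Gf L T U1 V1 U2 V2 B1 B2 w1 w2 z1 z2 a0 :
  (p <> 0)%nat -> adj01 G0 A -> 0 < eps -> 0 < d -> 0 <= T -> 0 <= L -> lipschitz F L -> lipschitz Gf L ->
  regular_pair p N G0 U1 V1 T B1 -> regular_pair p N G0 U2 V2 T B2 ->
  unif_cont p N G0 w1 -> unif_cont p N G0 w2 -> unif_cont p N G0 z1 -> unif_cont p N G0 z2 -> 0 <= a0 ->
  (forall y, inK p N G0 y -> Rabs (w1 y - w2 y) <= a0 /\ Rabs (z1 y - z2 y) <= a0) ->
  solves_on p N G0 A eps d F Gf w1 z1 U1 V1 T -> solves_on p N G0 A eps d F Gf w2 z2 U2 V2 T ->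
  forall t, 0 <= t <= T -> forall x, inK p N G0 x ->
    Rabs (U1 t x - U2 t x) + Rabs (V1 t x - V2 t x) <= stability_const p N G0 eps d T L * a0.
Proof.
  intros Hp HA He Hd HT HL HF HG P1 P2 Hw1 Hw2 Hz1 Hz2 Ha0 Hw Hfix1 Hfix2.
  set (E := growth_uv p N G0 eps d T). set (lam := weight_rate p N G0 eps d T L).
  assert (HE : 1 <= E) by (unfold E, growth_uv; apply growth_ge1; nra).
  assert (Hlam : 0 < lam) by (unfold lam, weight_rate; fold E; nra).
  set (a := 2 * E * a0). assert (Ha : 0 <= a) by (unfold a; solve_nonneg).
  pose proof P1 as [HB1 [_ [HBd1 _]]]. pose proof P2 as [HB2 [_ [HBd2 _]]].
  set (Q0 := 2 * (B1 + B2)). assert (HQ0 : 0 <= Q0) by (unfold Q0; lra).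
  assert (Hn : forall n, forall s, 0 <= s <= T -> forall y, inK p N G0 y ->
     Rabs (U1 s y - U2 s y) + Rabs (V1 s y - V2 s y) <= (2 * a + Q0 / 2 ^ n) * exp (lam * s)).
  { induction n; intros s Hs y Hy.
    - simpl. destruct (HBd1 s Hs y Hy). destruct (HBd2 s Hs y Hy).
      assert (1 <= exp (lam * s)) by (rewrite <- exp_0; apply exp_le; nra).
      pose proof (Rabs_sub_le (U1 s y) (U2 s y)). pose proof (Rabs_sub_le (V1 s y) (V2 s y)).
      assert (Q0 <= (2 * a + Q0 / 1) * exp (lam * s)).
      { unfold Rdiv. rewrite Rinv_1, Rmult_1_r. nra. }
      unfold Q0 in *. lra.
    - destruct (Hfix1 s Hs y Hy) as [E1 E2]. destruct (Hfix2 s Hs y Hy) as [E3 E4]. rewrite E1, E2, E3, E4.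
      assert (HQn : 0 <= 2 * a + Q0 / 2 ^ n).
      { assert (0 < 2 ^ n) by (apply pow_lt; lra). assert (0 <= Q0 / 2 ^ n) by (unfold Rdiv; solve_nonneg; left; apply Rinv_0_lt_compat; auto). lra. }
      eapply Rle_trans. apply (mild_map_contraction p N G0 A eps d F Gf L T U1 V1 U2 V2 B1 B2 w1 w2 z1 z2 a0
                               (2 * a + Q0 / 2 ^ n) s y Hp HA He Hd HT HL HF HG P1 P2 Hw1 Hw2 Hz1 Hz2 Ha0 Hw HQn IHn Hs Hy).
      fold E. fold lam. fold a.
      assert (1 <= exp (lam * s)) by (rewrite <- exp_0; apply exp_le; nra).
      replace ((2 * a + Q0 / 2 ^ S n) * exp (lam * s)) with (2 * a * exp (lam * s) / 2 + (2 * a + Q0 / 2 ^ n) / 2 * exp (lam * s)).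
      2: { simpl pow. field. apply pow_nonzero. lra. }
      nra. }
  intros t Ht x Hx.
  assert (HL2 : Rabs (U1 t x - U2 t x) + Rabs (V1 t x - V2 t x) <= 2 * a * exp (lam * t)).
  { apply (lim_pow2 _ _ (Q0 * exp (lam * t))). pose proof (exp_pos (lam * t)). solve_nonneg.
    intros n. eapply Rle_trans. apply (Hn n); auto. right. unfold Rdiv. ring. }
  unfold stability_const. fold E. fold lam.
  assert (exp (lam * t) <= exp (lam * T)) by (apply exp_le; apply Rmult_le_compat_l; lra).
  unfold a in HL2. assert (0 <= E * a0) by solve_nonneg. nra.
Qed.

Lemma duhamel_locconst p N G0 A c M G t : (p <> 0)%nat -> (N <= M)%nat -> (forall s, locconst p N G0 M (G s)) ->
  locconst p N G0 M (duhamel p N G0 A c G t).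
Proof.
  intros Hp HM H x x' Hx Hx' E. unfold duhamel. f_equal. apply functional_extensionality. intros s.
  apply (expL_locconst p N G0 A _ M (G s) Hp HM (H s) x x' Hx Hx' E).
Qed.

Lemma nemytskii_locconst p N G0 M F U V s : locconst p N G0 M (U s) -> locconst p N G0 M (V s) -> locconst p N G0 M (nemytskii F U V s).
Proof. intros H1 H2 x x' Hx Hx' E. unfold nemytskii. rewrite (H1 x x'), (H2 x x'); auto. Qed.

Lemma mild_map_u_locconst p N G0 A eps F M w U V t : (p <> 0)%nat -> (N <= M)%nat -> locconst p N G0 M w ->
  (forall s, locconst p N G0 M (U s) /\ locconst p N G0 M (V s)) -> locconst p N G0 M (mild_map_u p N G0 A eps F w U V t).
Proof.
  intros Hp HM Hw H x x' Hx Hx' E. unfold mild_map_u.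
  rewrite (expL_locconst p N G0 A _ M w Hp HM Hw x x' Hx Hx' E).
  rewrite (duhamel_locconst p N G0 A eps M (nemytskii F U V) t Hp HM) with (x := x) (x' := x'); auto.
  intros s. apply nemytskii_locconst; apply H.
Qed.

Lemma mild_map_v_locconst p N G0 A eps d Gf M z U V t : (p <> 0)%nat -> (N <= M)%nat -> locconst p N G0 M z ->
  (forall s, locconst p N G0 M (U s) /\ locconst p N G0 M (V s)) -> locconst p N G0 M (mild_map_v p N G0 A eps d Gf z U V t).
Proof.
  intros Hp HM Hw H x x' Hx Hx' E. unfold mild_map_v.
  rewrite (expL_locconst p N G0 A _ M z Hp HM Hw x x' Hx Hx' E).
  rewrite (duhamel_locconst p N G0 A (eps * d) M (nemytskii Gf U V) t Hp HM) with (x := x) (x' := x'); auto.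
  intros s. apply nemytskii_locconst; apply H.
Qed.

Lemma expL_time_equicont p N G0 A c w T : (p <> 0)%nat -> adj01 G0 A -> 0 <= c -> 0 <= T -> unif_cont p N G0 w ->
  time_equicont p N G0 (fun t => expL p N G0 A (c * t) w) T.
Proof.
  intros Hp HA Hc HT Hw. destruct (unif_cont_bounded p N G0 w Hp Hw) as [Bw [HBw Hb]].
  set (K := gen_bound p N G0 * Bw * exp (gen_bound p N G0 * (c * T))).
  assert (HK : 0 <= K) by (unfold K; pose proof (gen_bound_nonneg p N G0); pose proof (exp_pos (gen_bound p N G0 * (c * T))); solve_nonneg).
  intros e He. exists (e / (c * K + 1)). split. apply Rdiv_lt_0_compat; auto. assert (0 <= c * K) by solve_nonneg. lra.
  intros s s' Hs Hs' Hd x Hx.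
  eapply Rle_trans. apply (expL_time p N G0 A (c * s) (c * s') (c * T) w Bw x); auto.
  rewrite Rabs_right by (apply Rle_ge; nra). apply Rmult_le_compat_l; nra.
  rewrite Rabs_right by (apply Rle_ge; nra). apply Rmult_le_compat_l; nra.
  fold K. replace (c * s - c * s') with (c * (s - s')) by ring. rewrite Rabs_mult, (Rabs_right c) by lra.
  assert (0 <= c * K) by solve_nonneg.
  apply Rle_trans with (e / (c * K + 1) * (c * K)).
  - replace (c * Rabs (s - s') * K) with (Rabs (s - s') * (c * K)) by ring.
    apply Rmult_le_compat_r; auto. lra.
  - replace (e / (c * K + 1) * (c * K)) with (e - e / (c * K + 1)) by (field; lra).
    assert (0 < e / (c * K + 1)) by (apply Rdiv_lt_0_compat; lra). lra.
Qed.

Lemma time_equicont_plus p N G0 (G1 G2 : R -> digseq -> R) T : time_equicont p N G0 G1 T -> time_equicont p N G0 G2 T ->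
  time_equicont p N G0 (fun t x => G1 t x + G2 t x) T.
Proof.
  intros H1 H2 e He. destruct (H1 (e / 2)) as [d1 [Hd1 A1]]; [lra|]. destruct (H2 (e / 2)) as [d2 [Hd2 A2]]; [lra|].
  exists (Rmin d1 d2). split. apply Rmin_glb_lt; auto. intros s s' Hs Hs' Hd x Hx.
  replace (G1 s x + G2 s x - (G1 s' x + G2 s' x)) with ((G1 s x - G1 s' x) + (G2 s x - G2 s' x)) by ring.
  eapply Rle_trans. apply Rabs_triang.
  assert (Rabs (G1 s x - G1 s' x) <= e / 2) by (apply A1; auto; eapply Rlt_le_trans; [apply Hd|apply Rmin_l]).
  assert (Rabs (G2 s x - G2 s' x) <= e / 2) by (apply A2; auto; eapply Rlt_le_trans; [apply Hd|apply Rmin_r]).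
  lra.
Qed.

Lemma mild_map_regular p N G0 A eps d F Gf L M w z U V T B : (p <> 0)%nat -> adj01 G0 A -> 0 < eps -> 0 < d -> 0 <= T ->
  0 <= L -> lipschitz F L -> lipschitz Gf L -> (N <= M)%nat -> locconst p N G0 M w -> locconst p N G0 M z ->
  (forall s, locconst p N G0 M (U s) /\ locconst p N G0 M (V s)) -> regular_pair p N G0 U V T B ->
  exists B', regular_pair p N G0 (mild_map_u p N G0 A eps F w U V) (mild_map_v p N G0 A eps d Gf z U V) T B'.
Proof.
  intros Hp HA He Hd HT HL HF HG HM Hw Hz HLC HPG.
  assert (Uw : unif_cont p N G0 w) by (eapply locconst_unif_cont; eauto). assert (Uz : unif_cont p N G0 z) by (eapply locconst_unif_cont; eauto).
  destruct (unif_cont_bounded p N G0 w Hp Uw) as [Bw [HBw Hbw]].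
  destruct (unif_cont_bounded p N G0 z Hp Uz) as [Bz [HBz Hbz]].
  assert (GF := nemytskii_admissible p N G0 F L U V T B Hp HL HF HPG).
  assert (GG := nemytskii_admissible p N G0 Gf L U V T B Hp HL HG HPG).
  set (BF := Rabs (F 0 0) + L * (2 * B)). set (BG := Rabs (Gf 0 0) + L * (2 * B)).
  assert (Hed : 0 <= eps * d) by nra.
  set (E1 := growth p N G0 eps T). set (E2 := growth p N G0 (eps * d) T).
  assert (HE1 : 1 <= E1) by (apply growth_ge1; lra). assert (HE2 : 1 <= E2) by (apply growth_ge1; lra).
  assert (HBF : 0 <= BF) by apply GF. assert (HBG : 0 <= BG) by apply GG.
  exists (Bw * E1 + E1 * (T * BF) + (Bz * E2 + E2 * (T * BG))).
  split; [|split; [|split; [|split]]].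
  - solve_nonneg_sum.
  - intros s Hs. split; apply (locconst_unif_cont p N G0 M); auto.
    apply mild_map_u_locconst; auto. apply mild_map_v_locconst; auto.
  - intros s Hs x Hx. unfold mild_map_u, mild_map_v.
    assert (X1 : Rabs (expL p N G0 A (eps * s) w x) <= Bw * E1).
    { eapply Rle_trans. apply (expL_bound p N G0 A (eps * s) w Bw x Hp HA Uw HBw Hbw Hx).
      apply Rmult_le_compat_l; auto. apply exp_arg_le; try lra.
      rewrite Rabs_right by (apply Rle_ge; nra). apply Rmult_le_compat_l; lra. }
    assert (X2 : Rabs (expL p N G0 A (eps * d * s) z x) <= Bz * E2).
    { eapply Rle_trans. apply (expL_bound p N G0 A (eps * d * s) z Bz x Hp HA Uz HBz Hbz Hx).
      apply Rmult_le_compat_l; auto. apply exp_arg_le; try lra.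
      rewrite Rabs_right by (apply Rle_ge; nra). apply Rmult_le_compat_l; lra. }
    assert (X3 : Rabs (duhamel p N G0 A eps (nemytskii F U V) s x) <= E1 * (T * BF)).
    { eapply Rle_trans. apply (duhamel_bound p N G0 A eps (nemytskii F U V) T BF); auto. lra.
      apply Rmult_le_compat_l. lra. apply Rmult_le_compat_r; lra. }
    assert (X4 : Rabs (duhamel p N G0 A (eps * d) (nemytskii Gf U V) s x) <= E2 * (T * BG)).
    { eapply Rle_trans. apply (duhamel_bound p N G0 A (eps * d) (nemytskii Gf U V) T BG); auto.
      apply Rmult_le_compat_l. lra. apply Rmult_le_compat_r; lra. }
    assert (0 <= Bw * E1 + E1 * (T * BF)) by solve_nonneg_sum. assert (0 <= Bz * E2 + E2 * (T * BG)) by solve_nonneg_sum.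
    pose proof (Rabs_triang (expL p N G0 A (eps * s) w x) (duhamel p N G0 A eps (nemytskii F U V) s x)).
    pose proof (Rabs_triang (expL p N G0 A (eps * d * s) z x) (duhamel p N G0 A (eps * d) (nemytskii Gf U V) s x)).
    split; lra.
  - apply (time_equicont_plus p N G0 (fun t => expL p N G0 A (eps * t) w) (duhamel p N G0 A eps (nemytskii F U V)) T).
    apply expL_time_equicont; auto; lra. apply (duhamel_time_equicont p N G0 A eps _ T BF); auto; lra.
  - apply (time_equicont_plus p N G0 (fun t => expL p N G0 A (eps * d * t) z) (duhamel p N G0 A (eps * d) (nemytskii Gf U V)) T).
    apply expL_time_equicont; auto. apply (duhamel_time_equicont p N G0 A (eps * d) _ T BG); auto.
Qed.

Lemma geo_cauchy (a : nat -> R) C : 0 <= C -> (forall k, Rabs (a (S k) - a k) <= C / 2 ^ k) ->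
  (forall n j, Rabs (a (n + j)%nat - a n) <= 2 * C / 2 ^ n - 2 * C / 2 ^ (n + j)) /\
  Un_cv a (Lim a) /\ forall n, Rabs (Lim a - a n) <= 2 * C / 2 ^ n.
Proof.
  intros HC H.
  assert (H1 : forall n j, Rabs (a (n + j)%nat - a n) <= 2 * C / 2 ^ n - 2 * C / 2 ^ (n + j)).
  { intros n j. induction j.
    - rewrite Nat.add_0_r, Rminus_diag, Rabs_R0. lra.
    - replace (a (n + S j)%nat - a n) with ((a (S (n + j)) - a (n + j)%nat) + (a (n + j)%nat - a n))
        by (rewrite Nat.add_succ_r; ring).
      eapply Rle_trans. apply Rabs_triang. specialize (H (n + j)%nat).
      rewrite Nat.add_succ_r. simpl pow.
      assert (0 < 2 ^ (n + j)) by (apply pow_lt; lra).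
      replace (2 * C / 2 ^ n - 2 * C / (2 * 2 ^ (n + j))) with
        ((2 * C / 2 ^ n - 2 * C / 2 ^ (n + j)) + C / 2 ^ (n + j)) by (field; repeat split; apply pow_nonzero; lra).
      lra. }
  assert (H2 : forall n m, (n <= m)%nat -> Rabs (a m - a n) <= 2 * C / 2 ^ n).
  { intros n m Hnm. replace m with (n + (m - n))%nat by lia. eapply Rle_trans. apply H1.
    assert (0 <= 2 * C / 2 ^ (n + (m - n))). { unfold Rdiv. apply Rmult_le_pos. lra. left; apply Rinv_0_lt_compat, pow_lt; lra. }
    lra. }
  assert (Hc : Un_cv a (Lim a)).
  { apply Lim_cauchy. intros e He.
    destruct (nat_large (e / (2 * C + 1))) as [n0 [Hn0 Hl]]. apply Rdiv_lt_0_compat; lra.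
    exists n0. intros n m Hn Hm. unfold Rdist.
    assert (Hsm : forall k, (n0 <= k)%nat -> 2 * C / 2 ^ k < e).
    { intros k Hk. specialize (Hl k Hk). assert (0 < INR k) by (apply lt_0_INR; lia).
      pose proof (INR_le_pow2 k).
      apply Rle_lt_trans with ((2 * C + 1) / INR k).
      unfold Rdiv. apply Rmult_le_compat; try lra. left; apply Rinv_0_lt_compat; lra. apply Rinv_le_contravar; lra.
      apply (Rmult_lt_reg_r (/ (2 * C + 1))). apply Rinv_0_lt_compat; lra.
      replace ((2 * C + 1) / INR k * / (2 * C + 1)) with (/ INR k) by (field; lra).
      replace (e * / (2 * C + 1)) with (e / (2 * C + 1)) by (unfold Rdiv; ring). auto. }
    destruct (Nat.le_ge_cases n m).
    - rewrite Rabs_minus_sym. eapply Rle_lt_trans. apply H2; auto. apply Hsm; auto.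
    - eapply Rle_lt_trans. apply H2; auto. apply Hsm; auto. }
  split; auto. split; auto. intros n.
  apply (cv_abs_bound_ev (fun m => a m - a n) _ _ n).
  apply CV_minus; auto. intros e He; exists 0%nat; intros; unfold Rdist; rewrite Rminus_diag, Rabs_R0; lra.
  intros m Hm. apply H2; auto.
Qed.

Lemma abs_le0 z : Rabs z <= 0 -> z = 0.
Proof. intros H. destruct (Req_dec z 0); auto. exfalso. apply Rabs_pos_lt in H0. lra. Qed.

Lemma pow2_small C e : 0 <= C -> 0 < e -> exists n, C / 2 ^ n < e.
Proof.
  intros HC He. apply NNPP. intros Hn.
  assert (forall n, e <= 0 + C / 2 ^ n). { intros n. apply Rnot_lt_le. intros H. apply Hn. exists n. lra. }
  assert (e <= 0) by (apply (lim_pow2 e 0 C); auto). lra.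
Qed.

Lemma mild_map_lipschitz p N G0 A eps d F Gf L T U1 V1 U2 V2 B1 B2 w z r t x :
  (p <> 0)%nat -> adj01 G0 A -> 0 < eps -> 0 < d -> 0 <= T -> 0 <= L -> lipschitz F L -> lipschitz Gf L ->
  regular_pair p N G0 U1 V1 T B1 -> regular_pair p N G0 U2 V2 T B2 ->
  unif_cont p N G0 w -> unif_cont p N G0 z -> 0 <= r ->
  (forall s, 0 <= s <= T -> forall y, inK p N G0 y -> Rabs (U1 s y - U2 s y) <= r /\ Rabs (V1 s y - V2 s y) <= r) ->
  0 <= t <= T -> inK p N G0 x ->
  Rabs (mild_map_u p N G0 A eps F w U1 V1 t x - mild_map_u p N G0 A eps F w U2 V2 t x) +
  Rabs (mild_map_v p N G0 A eps d Gf z U1 V1 t x - mild_map_v p N G0 A eps d Gf z U2 V2 t x)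
  <= r * exp (weight_rate p N G0 eps d T L * T).
Proof.
  intros Hp HA He Hd HT HL HF HG P1 P2 Hw Hz Hr Hclose Ht Hx.
  set (lam := weight_rate p N G0 eps d T L).
  assert (Hlam : 0 < lam).
  { unfold lam, weight_rate. assert (1 <= growth_uv p N G0 eps d T) by (apply growth_ge1; nra). nra. }
  eapply Rle_trans.
  - apply (mild_map_contraction p N G0 A eps d F Gf L T U1 V1 U2 V2 B1 B2 w w z z 0 (2 * r) t x); auto; try lra.
    + intros; rewrite !Rminus_diag, Rabs_R0; lra.
    + intros s Hs y Hy. destruct (Hclose s Hs y Hy).
      fold lam. assert (1 <= exp (lam * s)) by (rewrite <- exp_0; apply exp_le; nra).
      apply Rle_trans with (2 * r); [lra|]. rewrite <- (Rmult_1_r (2 * r)) at 1.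
      apply Rmult_le_compat_l; lra.
  - fold lam. rewrite Rmult_0_r, Rplus_0_l.
    assert (exp (lam * t) <= exp (lam * T)) by (apply exp_le; apply Rmult_le_compat_l; lra).
    replace (2 * r / 2) with r by field. apply Rmult_le_compat_l; auto.
Qed.

Fixpoint picard_iter p N G0 A eps d (F Gf : R -> R -> R) (w z : digseq -> R) (n : nat) :
  (R -> digseq -> R) * (R -> digseq -> R) :=
  match n with
  | O => (fun _ => w, fun _ => z)
  | S n => (mild_map_u p N G0 A eps F w (fst (picard_iter p N G0 A eps d F Gf w z n)) (snd (picard_iter p N G0 A eps d F Gf w z n)),
            mild_map_v p N G0 A eps d Gf z (fst (picard_iter p N G0 A eps d F Gf w z n)) (snd (picard_iter p N G0 A eps d F Gf w z n)))
  end.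

Definition picard_u p N G0 A eps d F Gf w z n := fst (picard_iter p N G0 A eps d F Gf w z n).
Definition picard_v p N G0 A eps d F Gf w z n := snd (picard_iter p N G0 A eps d F Gf w z n).

Lemma picard_iter_regular p N G0 A eps d F Gf L T M w z :
  (p <> 0)%nat -> adj01 G0 A -> 0 < eps -> 0 < d -> 0 <= T -> 0 <= L -> lipschitz F L -> lipschitz Gf L ->
  (N <= M)%nat -> locconst p N G0 M w -> locconst p N G0 M z -> forall n,
  (forall t, locconst p N G0 M (picard_u p N G0 A eps d F Gf w z n t) /\
             locconst p N G0 M (picard_v p N G0 A eps d F Gf w z n t)) /\
  exists B, regular_pair p N G0 (picard_u p N G0 A eps d F Gf w z n) (picard_v p N G0 A eps d F Gf w z n) T B.
Proof.
  intros Hp HA He Hd HT HL HF HG HM Hw Hz n. induction n as [|n [HLC [B HB]]].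
  - split; [intros; split; auto|].
    destruct (unif_cont_bounded p N G0 w Hp (locconst_unif_cont p N G0 M w HM Hw)) as [Bw [HBw Hbw]].
    destruct (unif_cont_bounded p N G0 z Hp (locconst_unif_cont p N G0 M z HM Hz)) as [Bz [HBz Hbz]].
    exists (Bw + Bz). unfold picard_u, picard_v; simpl. split; [lra|split; [|split; [|split]]].
    + intros s _. split; eapply locconst_unif_cont; eauto.
    + intros s _ x Hx. pose proof (Hbw x Hx). pose proof (Hbz x Hx).
      pose proof (Rabs_pos (w x)). pose proof (Rabs_pos (z x)). split; lra.
    + intros e Hee. exists 1. split; [lra|]. intros. rewrite Rminus_diag, Rabs_R0. lra.
    + intros e Hee. exists 1. split; [lra|]. intros. rewrite Rminus_diag, Rabs_R0. lra.
  - split.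
    + intros t. split; [apply mild_map_u_locconst|apply mild_map_v_locconst]; auto.
    + eapply mild_map_regular; eauto.
Qed.

(* Consecutive Picard iterates approach each other geometrically, uniformly on [0,T] x K_N:
   this is the contraction estimate iterated in the weighted norm. *)
Lemma picard_iter_geometric p N G0 A eps d F Gf L T M w z :
  (p <> 0)%nat -> adj01 G0 A -> 0 < eps -> 0 < d -> 0 <= T -> 0 <= L -> lipschitz F L -> lipschitz Gf L ->
  (N <= M)%nat -> locconst p N G0 M w -> locconst p N G0 M z ->
  exists C, 0 <= C /\ forall k s, 0 <= s <= T -> forall y, inK p N G0 y ->
    Rabs (picard_u p N G0 A eps d F Gf w z (S k) s y - picard_u p N G0 A eps d F Gf w z k s y) <= C / 2 ^ k /\
    Rabs (picard_v p N G0 A eps d F Gf w z (S k) s y - picard_v p N G0 A eps d F Gf w z k s y) <= C / 2 ^ k.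
Proof.
  intros Hp HA He Hd HT HL HF HG HM Hw Hz.
  assert (Hreg := picard_iter_regular p N G0 A eps d F Gf L T M w z Hp HA He Hd HT HL HF HG HM Hw Hz).
  set (Un := picard_u p N G0 A eps d F Gf w z) in *. set (Vn := picard_v p N G0 A eps d F Gf w z) in *.
  assert (Uw : unif_cont p N G0 w) by (eapply locconst_unif_cont; eauto).
  assert (Uz : unif_cont p N G0 z) by (eapply locconst_unif_cont; eauto).
  destruct (proj2 (Hreg 0%nat)) as [B0 HB0]. destruct (proj2 (Hreg 1%nat)) as [B1 HB1].
  set (lam := weight_rate p N G0 eps d T L). set (E := growth_uv p N G0 eps d T).
  assert (HE : 1 <= E) by (unfold E, growth_uv; apply growth_ge1; nra).
  assert (Hlam : 0 < lam) by (unfold lam, weight_rate; fold E; nra).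
  set (Q0 := 2 * (B0 + B1)).
  assert (HQ0 : 0 <= Q0) by (unfold Q0; destruct HB0, HB1; lra).
  assert (Hdiff : forall n s, 0 <= s <= T -> forall y, inK p N G0 y ->
     Rabs (Un (S n) s y - Un n s y) + Rabs (Vn (S n) s y - Vn n s y) <= Q0 / 2 ^ n * exp (lam * s)).
  { induction n; intros s Hs y Hy.
    - simpl pow. assert (1 <= exp (lam * s)) by (rewrite <- exp_0; apply exp_le; nra).
      destruct HB0 as [_ [_ [Hb0 _]]]. destruct HB1 as [_ [_ [Hb1 _]]].
      destruct (Hb0 s Hs y Hy). destruct (Hb1 s Hs y Hy).
      pose proof (Rabs_sub_le (Un 1%nat s y) (Un 0%nat s y)). pose proof (Rabs_sub_le (Vn 1%nat s y) (Vn 0%nat s y)).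
      assert (Q0 <= Q0 / 1 * exp (lam * s)) by (unfold Rdiv; rewrite Rinv_1, Rmult_1_r; nra).
      unfold Q0 in *. lra.
    - destruct (proj2 (Hreg (S n))) as [Ba HBa]. destruct (proj2 (Hreg n)) as [Bb HBb].
      assert (HQ : 0 <= Q0 / 2 ^ n) by (unfold Rdiv; apply Rmult_le_pos; auto; left; apply Rinv_0_lt_compat, pow_lt; lra).
      change (Un (S (S n))) with (mild_map_u p N G0 A eps F w (Un (S n)) (Vn (S n))).
      change (Vn (S (S n))) with (mild_map_v p N G0 A eps d Gf z (Un (S n)) (Vn (S n))).
      change (Un (S n)) with (mild_map_u p N G0 A eps F w (Un n) (Vn n)) at 2.
      change (Vn (S n)) with (mild_map_v p N G0 A eps d Gf z (Un n) (Vn n)) at 2.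
      eapply Rle_trans. apply (mild_map_contraction p N G0 A eps d F Gf L T (Un (S n)) (Vn (S n)) (Un n) (Vn n) Ba Bb w w z z 0
         (Q0 / 2 ^ n) s y Hp HA He Hd HT HL HF HG HBa HBb Uw Uw Uz Uz (Rle_refl 0)); auto.
      intros; rewrite !Rminus_diag, Rabs_R0; lra.
      fold E. fold lam. right. simpl pow. field. apply pow_nonzero; lra. }
  exists (Q0 * exp (lam * T)). split; [pose proof (exp_pos (lam * T)); solve_nonneg_sum|].
  intros k s Hs y Hy. assert (H := Hdiff k s Hs y Hy).
  assert (exp (lam * s) <= exp (lam * T)) by (apply exp_le; apply Rmult_le_compat_l; lra).
  assert (Q0 / 2 ^ k * exp (lam * s) <= Q0 * exp (lam * T) / 2 ^ k).
  { unfold Rdiv. apply Rle_trans with (Q0 * / 2 ^ k * exp (lam * T)); [|right; ring].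
    apply Rmult_le_compat_l; auto. apply Rmult_le_pos; auto. left; apply Rinv_0_lt_compat, pow_lt; lra. }
  pose proof (Rabs_pos (Un (S k) s y - Un k s y)). pose proof (Rabs_pos (Vn (S k) s y - Vn k s y)). lra.
Qed.

Definition pointwise_lim (Un : nat -> R -> digseq -> R) : R -> digseq -> R :=
  fun t x => Lim (fun n => Un n t x).

Lemma time_equicont_unif_limit p N G0 (Un : nat -> R -> digseq -> R) U T C :
  (forall n, time_equicont p N G0 (Un n) T) ->
  (forall s, 0 <= s <= T -> forall y, inK p N G0 y -> forall n, Rabs (U s y - Un n s y) <= C / 2 ^ n) ->
  0 <= C -> time_equicont p N G0 U T.
Proof.
  intros HT HU HC e He. destruct (pow2_small C (e / 3)) as [n Hn]; [lra|lra|].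
  destruct (HT n (e / 3)) as [dl [Hdl Hdt]]; [lra|]. exists dl. split; auto.
  intros s s' Hs Hs' Hss x Hx.
  assert (A1 := HU s Hs x Hx n). assert (A2 := HU s' Hs' x Hx n).
  assert (A3 := Hdt s s' Hs Hs' Hss x Hx).
  replace (U s x - U s' x) with ((U s x - Un n s x) + (Un n s x - Un n s' x) - (U s' x - Un n s' x)) by ring.
  eapply Rle_trans. apply Rabs_sub_le. eapply Rle_trans. apply Rplus_le_compat_r. apply Rabs_triang. lra.
Qed.

Lemma geometric_limit_regular p N G0 M T (Un Vn : nat -> R -> digseq -> R) C :
  (N <= M)%nat -> 0 <= C ->
  (forall n t, locconst p N G0 M (Un n t) /\ locconst p N G0 M (Vn n t)) ->
  (forall n, exists B, regular_pair p N G0 (Un n) (Vn n) T B) ->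
  (forall k s, 0 <= s <= T -> forall y, inK p N G0 y ->
     Rabs (Un (S k) s y - Un k s y) <= C / 2 ^ k /\ Rabs (Vn (S k) s y - Vn k s y) <= C / 2 ^ k) ->
  (forall s, 0 <= s <= T -> forall y, inK p N G0 y -> forall n,
     Rabs (pointwise_lim Un s y - Un n s y) <= 2 * C / 2 ^ n /\
     Rabs (pointwise_lim Vn s y - Vn n s y) <= 2 * C / 2 ^ n) /\
  (forall t, locconst p N G0 M (pointwise_lim Un t) /\ locconst p N G0 M (pointwise_lim Vn t)) /\
  exists B, regular_pair p N G0 (pointwise_lim Un) (pointwise_lim Vn) T B.
Proof.
  intros HM HC HLC HPG Hk.
  set (U := pointwise_lim Un). set (V := pointwise_lim Vn).
  assert (HUl : forall s, 0 <= s <= T -> forall y, inK p N G0 y -> forall n,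
     Rabs (U s y - Un n s y) <= 2 * C / 2 ^ n /\ Rabs (V s y - Vn n s y) <= 2 * C / 2 ^ n).
  { intros s Hs y Hy n. split.
    - apply (geo_cauchy (fun n => Un n s y) C HC). intros k; apply Hk; auto.
    - apply (geo_cauchy (fun n => Vn n s y) C HC). intros k; apply Hk; auto. }
  assert (HLCl : forall t, locconst p N G0 M (U t) /\ locconst p N G0 M (V t)).
  { intros t. split; intros x x' Hx Hx' Ex; unfold U, V, pointwise_lim; apply Lim_ext; intros n; apply HLC; auto. }
  split; [exact HUl|]. split; [exact HLCl|].
  destruct (HPG 0%nat) as [B0 [HB0p [_ [Hb0 _]]]].
  exists (B0 + 2 * C). split; [lra|split; [|split; [|split]]].
  - intros s _. split; eapply locconst_unif_cont; eauto; apply HLCl.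
  - intros s Hs x Hx. destruct (Hb0 s Hs x Hx). destruct (HUl s Hs x Hx 0%nat). simpl pow in *.
    unfold Rdiv in *. rewrite Rinv_1, Rmult_1_r in *.
    pose proof (Rabs_triang (U s x - Un 0%nat s x) (Un 0%nat s x)).
    pose proof (Rabs_triang (V s x - Vn 0%nat s x) (Vn 0%nat s x)).
    replace (U s x - Un 0%nat s x + Un 0%nat s x) with (U s x) in * by ring.
    replace (V s x - Vn 0%nat s x + Vn 0%nat s x) with (V s x) in * by ring. lra.
  - apply (time_equicont_unif_limit p N G0 Un U T (2 * C)); [|intros; apply HUl; auto|lra].
    intros n. destruct (HPG n) as [Bn [_ [_ [_ [HTn _]]]]]. exact HTn.
  - apply (time_equicont_unif_limit p N G0 Vn V T (2 * C)); [|intros; apply HUl; auto|lra].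
    intros n. destruct (HPG n) as [Bn [_ [_ [_ [_ HTn]]]]]. exact HTn.
Qed.

Lemma picard_limit_fixed p N G0 A eps d F Gf L T M w z C B :
  (p <> 0)%nat -> adj01 G0 A -> 0 < eps -> 0 < d -> 0 <= T -> 0 <= L -> lipschitz F L -> lipschitz Gf L ->
  (N <= M)%nat -> locconst p N G0 M w -> locconst p N G0 M z -> 0 <= C ->
  regular_pair p N G0 (pointwise_lim (picard_u p N G0 A eps d F Gf w z))
                      (pointwise_lim (picard_v p N G0 A eps d F Gf w z)) T B ->
  (forall s, 0 <= s <= T -> forall y, inK p N G0 y -> forall n,
     Rabs (pointwise_lim (picard_u p N G0 A eps d F Gf w z) s y - picard_u p N G0 A eps d F Gf w z n s y) <= 2 * C / 2 ^ n /\
     Rabs (pointwise_lim (picard_v p N G0 A eps d F Gf w z) s y - picard_v p N G0 A eps d F Gf w z n s y) <= 2 * C / 2 ^ n) ->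
  solves_on p N G0 A eps d F Gf w z (pointwise_lim (picard_u p N G0 A eps d F Gf w z))
    (pointwise_lim (picard_v p N G0 A eps d F Gf w z)) T.
Proof.
  intros Hp HA He Hd HT HL HF HG HM Hw Hz HC HPGl HUl t Ht x Hx.
  set (Un := picard_u p N G0 A eps d F Gf w z) in *. set (Vn := picard_v p N G0 A eps d F Gf w z) in *.
  set (U := pointwise_lim Un) in *. set (V := pointwise_lim Vn) in *.
  assert (Uw : unif_cont p N G0 w) by (eapply locconst_unif_cont; eauto).
  assert (Uz : unif_cont p N G0 z) by (eapply locconst_unif_cont; eauto).
  set (lam := weight_rate p N G0 eps d T L).
  assert (Hlam : 0 < lam).
  { unfold lam, weight_rate. assert (1 <= growth_uv p N G0 eps d T) by (apply growth_ge1; nra). nra. }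
  assert (Hp2 : forall n, 0 < 2 ^ n) by (intros; apply pow_lt; lra).
  assert (Hst : forall n,
    Rabs (mild_map_u p N G0 A eps F w (Un n) (Vn n) t x - mild_map_u p N G0 A eps F w U V t x) +
    Rabs (mild_map_v p N G0 A eps d Gf z (Un n) (Vn n) t x - mild_map_v p N G0 A eps d Gf z U V t x)
    <= 2 * C / 2 ^ n * exp (lam * T)).
  { intros n.
    destruct (proj2 (picard_iter_regular p N G0 A eps d F Gf L T M w z Hp HA He Hd HT HL HF HG HM Hw Hz n)) as [Bn HBn].
    apply (mild_map_lipschitz p N G0 A eps d F Gf L T _ _ _ _ Bn B); auto.
    - unfold Rdiv; apply Rmult_le_pos; [lra|]; left; apply Rinv_0_lt_compat; auto.
    - intros s Hs y Hy. destruct (HUl s Hs y Hy n).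
      rewrite (Rabs_minus_sym (Un n s y)), (Rabs_minus_sym (Vn n s y)). auto. }
  assert (Hdefect : Rabs (U t x - mild_map_u p N G0 A eps F w U V t x) +
                    Rabs (V t x - mild_map_v p N G0 A eps d Gf z U V t x) <= 0).
  { apply (lim_pow2 _ 0 (2 * C + 2 * C * exp (lam * T))); [pose proof (exp_pos (lam * T)); solve_nonneg_sum|].
    intros n. destruct (HUl t Ht x Hx (S n)) as [A1 A2]. specialize (Hst n).
    change (Un (S n)) with (mild_map_u p N G0 A eps F w (Un n) (Vn n)) in A1.
    change (Vn (S n)) with (mild_map_v p N G0 A eps d Gf z (Un n) (Vn n)) in A2.
    set (pu := mild_map_u p N G0 A eps F w (Un n) (Vn n) t x) in *.
    set (pv := mild_map_v p N G0 A eps d Gf z (Un n) (Vn n) t x) in *.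
    set (qu := mild_map_u p N G0 A eps F w U V t x) in *.
    set (qv := mild_map_v p N G0 A eps d Gf z U V t x) in *.
    simpl pow in A1, A2.
    replace (2 * C / (2 * 2 ^ n)) with (C / 2 ^ n) in A1, A2 by (field; apply pow_nonzero; lra).
    replace (0 + (2 * C + 2 * C * exp (lam * T)) / 2 ^ n)
      with (C / 2 ^ n + C / 2 ^ n + 2 * C / 2 ^ n * exp (lam * T)) by (field; apply pow_nonzero; lra).
    pose proof (Rabs_triang (U t x - pu) (pu - qu)). pose proof (Rabs_triang (V t x - pv) (pv - qv)).
    replace (U t x - pu + (pu - qu)) with (U t x - qu) in * by ring.
    replace (V t x - pv + (pv - qv)) with (V t x - qv) in * by ring.
    lra. }
  pose proof (Rabs_pos (U t x - mild_map_u p N G0 A eps F w U V t x)).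
  pose proof (Rabs_pos (V t x - mild_map_v p N G0 A eps d Gf z U V t x)).
  split; apply Rminus_diag_uniq, abs_le0; lra.
Qed.

Lemma picard_fixed_point p N G0 A eps d F Gf L T M w z :
  (p <> 0)%nat -> adj01 G0 A -> 0 < eps -> 0 < d -> 0 <= T -> 0 <= L -> lipschitz F L -> lipschitz Gf L ->
  (N <= M)%nat -> locconst p N G0 M w -> locconst p N G0 M z ->
  exists U V B, regular_pair p N G0 U V T B /\ (forall t, locconst p N G0 M (U t) /\ locconst p N G0 M (V t)) /\
    solves_on p N G0 A eps d F Gf w z U V T.
Proof.
  intros Hp HA He Hd HT HL HF HG HM Hw Hz.
  assert (Hreg := picard_iter_regular p N G0 A eps d F Gf L T M w z Hp HA He Hd HT HL HF HG HM Hw Hz).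
  destruct (picard_iter_geometric p N G0 A eps d F Gf L T M w z Hp HA He Hd HT HL HF HG HM Hw Hz)
    as [C [HC Hk]].
  destruct (geometric_limit_regular p N G0 M T (picard_u p N G0 A eps d F Gf w z) (picard_v p N G0 A eps d F Gf w z) C
    HM HC (fun n => proj1 (Hreg n)) (fun n => proj2 (Hreg n)) Hk) as [HUl [HLCl [B HB]]].
  exists (pointwise_lim (picard_u p N G0 A eps d F Gf w z)), (pointwise_lim (picard_v p N G0 A eps d F Gf w z)), B.
  split; [exact HB|]. split; [exact HLCl|].
  apply (picard_limit_fixed p N G0 A eps d F Gf L T M w z C B); auto.
Qed.

Lemma bw_interval (ts : nat -> R) T : (forall n, 0 <= ts n <= T) ->
  exists l, 0 <= l <= T /\ forall del, 0 < del -> forall n0, exists n, (n0 <= n)%nat /\ Rabs (ts n - l) < del.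
Proof.
  intros H. destruct (Bolzano_Weierstrass ts (fun c => 0 <= c <= T) (compact_P3 0 T) H) as [l Hl].
  assert (Hc : forall del, 0 < del -> forall n0, exists n, (n0 <= n)%nat /\ Rabs (ts n - l) < del).
  { intros del Hdel n0.
    assert (Hnb : neighbourhood (disc l (mkposreal del Hdel)) l) by (exists (mkposreal del Hdel); intros y Hy; auto).
    unfold ValAdh in Hl. destruct (Hl (disc l (mkposreal del Hdel)) n0 Hnb) as [n [Hn Hd]]. exists n. split; auto. }
  exists l. split; auto. split.
  - apply Rnot_lt_le. intros Hlt. destruct (Hc (- l) ltac:(lra) 0%nat) as [n [_ Hn]]. specialize (H n).
    apply Rabs_def2 in Hn. lra.
  - apply Rnot_lt_le. intros Hlt. destruct (Hc (l - T) ltac:(lra) 0%nat) as [n [_ Hn]]. specialize (H n).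
    apply Rabs_def2 in Hn. lra.
Qed.

Lemma contS_time_equicont p N G0 tau0 u T : 0 <= T -> T < tau0 -> contS p N G0 tau0 u -> time_equicont p N G0 u T.
Proof.
  intros HT HTt Hc e He. apply NNPP. intros Hn.
  assert (Hb : forall n : nat, exists sx : R * R * digseq, 0 <= fst (fst sx) <= T /\ 0 <= snd (fst sx) <= T /\
     Rabs (fst (fst sx) - snd (fst sx)) < / INR (S n) /\ inK p N G0 (snd sx) /\
     e < Rabs (u (fst (fst sx)) (snd sx) - u (snd (fst sx)) (snd sx))).
  { intros n. apply NNPP. intros Hm. apply Hn. exists (/ INR (S n)). split.
    apply Rinv_0_lt_compat, lt_0_INR; lia.
    intros s s' Hs Hs' Hd x Hx. apply Rnot_lt_le. intros Hl. apply Hm. exists (s, s', x). simpl; auto. }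
  destruct (choice _ Hb) as [sx Hsx].
  destruct (bw_interval (fun n => fst (fst (sx n))) T) as [l [Hl Hacc]]. intros n; apply Hsx.
  destruct (Hc l ltac:(lra) (e / 2) ltac:(lra)) as [d0 [Hd0 Hcl]].
  destruct (nat_large (d0 / 2)) as [n0 [Hn0 Hlg]]; [lra|].
  destruct (Hacc (d0 / 2) ltac:(lra) n0) as [n [Hnn Hn1]].
  destruct (Hsx n) as [H1 [H2 [H3 [H4 H5]]]].
  assert (Hsn : / INR (S n) < d0 / 2) by (apply Hlg; lia).
  assert (A1 := Hcl (fst (fst (sx n))) ltac:(lra) ltac:(lra) (snd (sx n)) H4).
  assert (A2 : Rabs (snd (fst (sx n)) - l) < d0).
  { replace (snd (fst (sx n)) - l) with ((fst (fst (sx n)) - l) - (fst (fst (sx n)) - snd (fst (sx n)))) by ring.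
    eapply Rle_lt_trans. apply Rabs_sub_le. lra. }
  assert (A3 := Hcl (snd (fst (sx n))) ltac:(lra) A2 (snd (sx n)) H4).
  assert (Rabs (u (fst (fst (sx n))) (snd (sx n)) - u (snd (fst (sx n))) (snd (sx n))) < e).
  { replace (u (fst (fst (sx n))) (snd (sx n)) - u (snd (fst (sx n))) (snd (sx n))) with
      ((u (fst (fst (sx n))) (snd (sx n)) - u l (snd (sx n))) - (u (snd (fst (sx n))) (snd (sx n)) - u l (snd (sx n)))) by ring.
    eapply Rle_lt_trans. apply Rabs_sub_le. lra. }
  lra.
Qed.

Lemma time_margin p N G0 tau0 u T a b : (p <> 0)%nat -> 0 <= T -> T < tau0 -> contS p N G0 tau0 u ->
  (forall s, 0 <= s <= T -> inXinf p N G0 (u s) /\ inU p N G0 a b (u s)) ->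
  exists del, 0 < del /\ forall s, 0 <= s <= T -> forall x, inK p N G0 x -> a + del <= u s x <= b - del.
Proof.
  intros Hp HT HTt Hc Hu. apply NNPP. intros Hn.
  assert (Hb : forall n : nat, exists sx : R * digseq, 0 <= fst sx <= T /\ inK p N G0 (snd sx) /\
     ~ (a + / INR (S n) <= u (fst sx) (snd sx) <= b - / INR (S n))).
  { intros n. apply NNPP. intros Hm. apply Hn. exists (/ INR (S n)). split.
    apply Rinv_0_lt_compat, lt_0_INR; lia.
    intros s Hs x Hx. apply NNPP. intros Hq. apply Hm. exists (s, x). simpl; auto. }
  destruct (choice _ Hb) as [sx Hsx].
  destruct (bw_interval (fun n => fst (sx n)) T) as [l [Hl Hacc]]. intros n; apply Hsx.
  destruct (Hu l Hl) as [Hl1 Hl2].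
  destruct (inXinf_margin p N G0 a b (u l) Hp Hl1 Hl2) as [dl [Hdl Hml]].
  destruct (Hc l ltac:(lra) (dl / 2) ltac:(lra)) as [d0 [Hd0 Hcl]].
  destruct (nat_large (dl / 2)) as [n0 [Hn0 Hlg]]; [lra|].
  destruct (Hacc d0 Hd0 n0) as [n [Hnn Hn1]].
  destruct (Hsx n) as [H1 [H2 H3]]. apply H3.
  assert (Hsn : / INR (S n) < dl / 2) by (apply Hlg; lia).
  assert (A1 := Hcl (fst (sx n)) ltac:(lra) Hn1 (snd (sx n)) H2).
  assert (A2 := Hml (snd (sx n)) H2). apply Rabs_def2 in A1. lra.
Qed.

Lemma bw_square (xs ys : nat -> R) al be : (forall n, al <= xs n <= be /\ al <= ys n <= be) ->
  exists lx ly, al <= lx <= be /\ al <= ly <= be /\ forall del, 0 < del -> forall n0, exists n,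
    (n0 <= n)%nat /\ Rabs (xs n - lx) < del /\ Rabs (ys n - ly) < del.
Proof.
  intros H.
  destruct (bw_interval (fun n => xs n - al) (be - al)) as [lx [Hlx Hax]].
  { intros n; destruct (H n); lra. }
  assert (Hs : forall k, exists n, (k <= n)%nat /\ Rabs (xs n - (lx + al)) < / INR (S k)).
  { intros k. destruct (Hax (/ INR (S k)) ltac:(apply Rinv_0_lt_compat, lt_0_INR; lia) k) as [n [Hn Hd]].
    exists n. split; auto. replace (xs n - (lx + al)) with (xs n - al - lx) by ring. auto. }
  destruct (choice _ Hs) as [sg Hsg].
  destruct (bw_interval (fun k => ys (sg k) - al) (be - al)) as [ly [Hly Hay]].
  { intros k; destruct (H (sg k)); lra. }
  exists (lx + al), (ly + al). split; [lra|]. split; [lra|].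
  intros del Hdel n0. destruct (nat_large del Hdel) as [k0 [Hk0 Hl]].
  destruct (Hay del Hdel (Nat.max n0 k0)) as [k [Hk Hd]].
  exists (sg k). destruct (Hsg k) as [Hk1 Hk2]. split; [lia|]. split.
  - eapply Rlt_trans. apply Hk2. apply Hl. lia.
  - replace (ys (sg k) - (ly + al)) with (ys (sg k) - al - ly) by ring. auto.
Qed.

Lemma cont2_bounded g al be : al <= be -> (forall x y, al <= x <= be -> al <= y <= be -> cont2 g x y) ->
  exists K, 0 <= K /\ forall x y, al <= x <= be -> al <= y <= be -> Rabs (g x y) <= K.
Proof.
  intros Hab Hc. apply NNPP. intros Hn.
  assert (Hb : forall n : nat, exists xy : R * R, (al <= fst xy <= be /\ al <= snd xy <= be) /\ INR n < Rabs (g (fst xy) (snd xy))).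
  { intros n. apply NNPP. intros Hm. apply Hn. exists (INR n). split. apply pos_INR.
    intros x y Hx Hy. apply Rnot_lt_le. intros Hl. apply Hm. exists (x, y). simpl; auto. }
  destruct (choice _ Hb) as [xy Hxy].
  destruct (bw_square (fun n => fst (xy n)) (fun n => snd (xy n)) al be) as [lx [ly [Hlx [Hly Hacc]]]].
  intros n; apply Hxy.
  destruct (Hc lx ly Hlx Hly 1 ltac:(lra)) as [d [Hd Hcd]].
  destruct (archimed (Rabs (g lx ly) + 1)) as [Har _].
  set (n1 := Z.to_nat (up (Rabs (g lx ly) + 1))).
  assert (Hn1 : Rabs (g lx ly) + 1 < INR n1).
  { unfold n1. rewrite INR_IZR_INZ, Z2Nat.id. auto. apply le_IZR. pose proof (Rabs_pos (g lx ly)). lra. }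
  destruct (Hacc d Hd n1) as [n [Hnn [H1 H2]]].
  assert (A := Hcd _ _ H1 H2). destruct (Hxy n) as [_ Hg].
  assert (INR n1 <= INR n) by (apply le_INR; auto).
  pose proof (Rabs_triang_inv (g (fst (xy n)) (snd (xy n))) (g lx ly)). lra.
Qed.

Lemma mvt_bound (h h' : R -> R) x x' K : (forall c, Rmin x x' <= c <= Rmax x x' -> derivable_pt_lim h c (h' c)) ->
  (forall c, Rmin x x' <= c <= Rmax x x' -> Rabs (h' c) <= K) -> Rabs (h x - h x') <= K * Rabs (x - x').
Proof.
  intros Hd Hb. destruct (MVT_abs h h' x' x) as [c [Hc1 Hc2]].
  { intros c Hc. apply Hd. rewrite Rmin_comm, Rmax_comm. auto. }
  rewrite Hc1. apply Rmult_le_compat_r. apply Rabs_pos. apply Hb. rewrite Rmin_comm, Rmax_comm. auto.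
Qed.

Lemma minmax_in al be x x' c : al <= x <= be -> al <= x' <= be -> Rmin x x' <= c <= Rmax x x' -> al <= c <= be.
Proof. intros. unfold Rmin, Rmax in *. destruct Rle_dec; lra. Qed.

Lemma C1_lipschitz a b f al be : C1_grad_nz a b f -> a < al -> al <= be -> be < b ->
  exists L, 0 <= L /\ forall x y x' y', al <= x <= be -> al <= y <= be -> al <= x' <= be -> al <= y' <= be ->
    Rabs (f x y - f x' y') <= L * (Rabs (x - x') + Rabs (y - y')).
Proof.
  intros [fx [fy Hf]] Ha Hab Hb.
  destruct (cont2_bounded fx al be Hab) as [Kx [HKx Hx]].
  { intros x y Hx0 Hy0. apply Hf; lra. }
  destruct (cont2_bounded fy al be Hab) as [Ky [HKy Hy]].
  { intros x y Hx0 Hy0. apply Hf; lra. }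
  exists (Kx + Ky). split; [lra|]. intros x y x' y' H1 H2 H3 H4.
  replace (f x y - f x' y') with ((f x y - f x' y) + (f x' y - f x' y')) by ring.
  eapply Rle_trans. apply Rabs_triang.
  assert (A1 : Rabs (f x y - f x' y) <= Kx * Rabs (x - x')).
  { apply (mvt_bound (fun s => f s y) (fun s => fx s y)).
    intros c Hc. assert (al <= c <= be) by (eapply minmax_in; [apply H1|apply H3|auto]). apply Hf; lra.
    intros c Hc. assert (al <= c <= be) by (eapply minmax_in; [apply H1|apply H3|auto]). apply Hx; auto. }
  assert (A2 : Rabs (f x' y - f x' y') <= Ky * Rabs (y - y')).
  { apply (mvt_bound (fun s => f x' s) (fun s => fy x' s)).
    intros c Hc. assert (al <= c <= be) by (eapply minmax_in; [apply H2|apply H4|auto]). apply Hf; lra.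
    intros c Hc. assert (al <= c <= be) by (eapply minmax_in; [apply H2|apply H4|auto]). apply Hy; auto. }
  pose proof (Rabs_pos (x - x')). pose proof (Rabs_pos (y - y')). nra.
Qed.

Definition clamp al be x := Rmax al (Rmin be x).

Lemma clamp_in al be x : al <= be -> al <= clamp al be x <= be.
Proof. intros. unfold clamp, Rmax, Rmin. repeat destruct Rle_dec; lra. Qed.

Lemma clamp_id al be x : al <= x <= be -> clamp al be x = x.
Proof. intros. unfold clamp, Rmax, Rmin. repeat destruct Rle_dec; lra. Qed.

Lemma clamp_lip al be x x' : al <= be -> Rabs (clamp al be x - clamp al be x') <= Rabs (x - x').
Proof. intros. unfold clamp, Rmax, Rmin. repeat destruct Rle_dec; unfold Rabs; repeat destruct Rcase_abs; lra. Qed.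

Definition clamped (f : R -> R -> R) al be := fun x y => f (clamp al be x) (clamp al be y).

Lemma clamped_lipschitz f al be L : al <= be ->
  (forall x y x' y', al <= x <= be -> al <= y <= be -> al <= x' <= be -> al <= y' <= be ->
    Rabs (f x y - f x' y') <= L * (Rabs (x - x') + Rabs (y - y'))) -> 0 <= L ->
  lipschitz (clamped f al be) L.
Proof.
  intros Hab H HL x y x' y'. unfold clamped. eapply Rle_trans. apply H; apply clamp_in; auto.
  apply Rmult_le_compat_l; auto. apply Rplus_le_compat; apply clamp_lip; auto.
Qed.

Lemma clamped_id f al be x y : al <= x <= be -> al <= y <= be -> clamped f al be x y = f x y.
Proof. intros. unfold clamped. rewrite !clamp_id; auto. Qed.

Definition reps_ok p N G0 (rep : nat -> nat -> digseq) := forall M c, (N <= M)%nat -> (c < p ^ M)%nat ->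
  inG0b G0 (trunc p N (digits p c)) = true -> valid p (rep M c) /\ trunc p M (rep M c) = c.

Lemma rep_inK p N G0 rep M c : (p <> 0)%nat -> reps_ok p N G0 rep -> (N <= M)%nat -> (c < p ^ M)%nat ->
  inG0b G0 (trunc p N (digits p c)) = true -> inK p N G0 (rep M c).
Proof.
  intros Hp HR HM Hc Hok. destruct (HR M c HM Hc Hok) as [Hv Ht]. split; auto.
  apply inG0b_spec. rewrite <- (trunc_mod p N M) by auto. rewrite Ht.
  rewrite <- (trunc_digits p N c Hp). auto.
Qed.

Lemma sum_single_ball p N G0 rep M (h : nat -> R) x : (p <> 0)%nat -> reps_ok p N G0 rep -> (N <= M)%nat ->
  inK p N G0 x ->
  sumR (p ^ M) (fun c => if inG0b G0 (trunc p N (digits p c)) then h c * Omega p M x (rep M c) else 0)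
  = h (trunc p M x).
Proof.
  intros Hp HR HM Hx. set (c0 := trunc p M x).
  assert (Hc0 : (c0 < p ^ M)%nat) by (apply trunc_lt, Hx).
  assert (Hok : inG0b G0 (trunc p N (digits p c0)) = true).
  { apply inG0b_spec. rewrite trunc_digits by auto. unfold c0. rewrite trunc_mod; auto. apply Hx. apply Hx. }
  rewrite (sumR_single _ _ c0 Hc0).
  - rewrite Hok. unfold Omega. destruct (HR M c0 HM Hc0 Hok) as [_ Ht]. rewrite Ht.
    unfold c0. rewrite Nat.eqb_refl. ring.
  - intros c Hc Hne. destruct (inG0b G0 (trunc p N (digits p c))) eqn:E; auto.
    destruct (HR M c HM Hc E) as [_ Ht]. unfold Omega. rewrite Ht.
    destruct (Nat.eqb_spec (trunc p M x) c); [|ring]. exfalso. apply Hne. subst. auto.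
Qed.

Lemma inXM_locconst p N G0 rep M phi : inXM p N G0 rep M phi -> locconst p N G0 M phi.
Proof.
  intros [coef H] x x' Hx Hx' E. rewrite (H x Hx), (H x' Hx'). apply sumR_ext. intros c _.
  rewrite (Omega_tr p M x x' _ E). auto.
Qed.

Lemma locconst_inXM p N G0 rep M phi : (p <> 0)%nat -> reps_ok p N G0 rep -> (N <= M)%nat ->
  locconst p N G0 M phi -> inXM p N G0 rep M phi.
Proof.
  intros Hp HR HM H. exists (fun c => phi (rep M c)). intros x Hx.
  rewrite (sum_single_ball p N G0 rep M (fun c => phi (rep M c))); auto.
  apply H; auto. apply rep_inK with (N := N) (G0 := G0); auto. apply trunc_lt, Hx.
  apply inG0b_spec. rewrite trunc_digits by auto. rewrite trunc_mod; auto. apply Hx. apply Hx.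
  destruct (HR M (trunc p M x) HM) as [_ Ht]. apply trunc_lt, Hx.
  apply inG0b_spec. rewrite trunc_digits by auto. rewrite trunc_mod; auto. apply Hx. apply Hx.
  rewrite Ht. auto.
Qed.

Lemma PM_eq p N G0 rep M phi x : (p <> 0)%nat -> reps_ok p N G0 rep -> (N <= M)%nat -> inK p N G0 x ->
  PM p N G0 rep M phi x = phi (rep M (trunc p M x)).
Proof.
  intros Hp HR HM Hx. unfold PM. rewrite (sum_single_ball p N G0 rep M (fun c => phi (rep M c))); auto.
Qed.

Lemma rep_props p N G0 rep M x : (p <> 0)%nat -> reps_ok p N G0 rep -> (N <= M)%nat -> inK p N G0 x ->
  inK p N G0 (rep M (trunc p M x)) /\ trunc p M (rep M (trunc p M x)) = trunc p M x.
Proof.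
  intros Hp HR HM Hx.
  assert (Hc : (trunc p M x < p ^ M)%nat) by (apply trunc_lt, Hx).
  assert (Hok : inG0b G0 (trunc p N (digits p (trunc p M x))) = true).
  { apply inG0b_spec. rewrite trunc_digits by auto. rewrite trunc_mod; auto. apply Hx. apply Hx. }
  split. apply rep_inK with (N := N) (G0 := G0); auto. apply (HR M _ HM Hc Hok).
Qed.

Lemma PM_locconst p N G0 rep M phi : (p <> 0)%nat -> reps_ok p N G0 rep -> (N <= M)%nat -> locconst p N G0 M (PM p N G0 rep M phi).
Proof. intros Hp HR HM x x' Hx Hx' E. rewrite !PM_eq; auto. rewrite E. auto. Qed.

Lemma PM_close p N G0 rep phi e : (p <> 0)%nat -> reps_ok p N G0 rep -> unif_cont p N G0 phi -> 0 < e ->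
  exists M0, (N <= M0)%nat /\ forall M, (M0 <= M)%nat -> forall x, inK p N G0 x ->
    Rabs (PM p N G0 rep M phi x - phi x) <= e.
Proof.
  intros Hp HR Hu He. destruct (Hu e He) as [m [Hm H]]. exists m. split; auto.
  intros M HM x Hx. rewrite PM_eq; auto; try lia. destruct (rep_props p N G0 rep M x Hp HR ltac:(lia) Hx) as [H1 H2].
  apply H; auto. apply (trunc_eq_le p m M); auto. apply H1. apply Hx.
Qed.

Lemma locconst_inXinf p N G0 M phi : locconst p N G0 M phi -> inXinf p N G0 phi.
Proof. intros H x Hx e He. exists M. intros y Hy E. rewrite (H y x Hy Hx E), Rminus_diag, Rabs_R0. auto. Qed.

Lemma duhamel_ext p N G0 A c G1 G2 t x : (p <> 0)%nat -> 0 <= t ->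
  (forall s, 0 <= s <= t -> forall y, inK p N G0 y -> G1 s y = G2 s y) -> inK p N G0 x ->
  duhamel p N G0 A c G1 t x = duhamel p N G0 A c G2 t x.
Proof.
  intros Hp Ht H Hx. unfold duhamel. apply RInt_ext; auto. intros s Hs. apply expL_ext; auto.
Qed.

Lemma regular_pair_restrict p N G0 U V T T' B : 0 <= T' <= T -> regular_pair p N G0 U V T B -> regular_pair p N G0 U V T' B.
Proof.
  intros HT [HB [HU [HBd [H1 H2]]]]. split; auto. split; [|split; [|split]].
  - intros s Hs; apply HU; lra.
  - intros s Hs; apply HBd; lra.
  - intros e He. destruct (H1 e He) as [d [Hd Hd']]. exists d. split; auto. intros; apply Hd'; auto; lra.
  - intros e He. destruct (H2 e He) as [d [Hd Hd']]. exists d. split; auto. intros; apply Hd'; auto; lra.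
Qed.

Lemma solves_on_restrict p N G0 A eps d F Gf w z U V T T' :
  T' <= T -> solves_on p N G0 A eps d F Gf w z U V T -> solves_on p N G0 A eps d F Gf w z U V T'.
Proof. intros HT H t Ht x Hx. apply H; auto. lra. Qed.

(* The fixed-point equations only see the nonlinearities on the range of (U, V):
   this lets us switch between f and its clamped version inside a box. *)
Lemma solves_on_change p N G0 A eps d F1 G1 F2 G2 w z U V T : (p <> 0)%nat ->
  (forall s, 0 <= s <= T -> forall y, inK p N G0 y ->
     F1 (U s y) (V s y) = F2 (U s y) (V s y) /\ G1 (U s y) (V s y) = G2 (U s y) (V s y)) ->
  solves_on p N G0 A eps d F1 G1 w z U V T -> solves_on p N G0 A eps d F2 G2 w z U V T.
Proof.
  intros Hp HFG H t Ht x Hx. destruct (H t Ht x Hx) as [E1 E2].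
  unfold mild_map_u, mild_map_v in *. rewrite E1 at 1. rewrite E2 at 1. split; f_equal.
  - apply duhamel_ext; auto; try lra. intros s Hs y Hy. apply (HFG s ltac:(lra) y Hy).
  - apply duhamel_ext; auto; try lra. intros s Hs y Hy. apply (HFG s ltac:(lra) y Hy).
Qed.

Lemma mild_solution_regular p N G0 A a b f g eps d InX tau0 u0 v0 u v T :
  (p <> 0)%nat -> (forall phi, InX phi -> inXinf p N G0 phi) -> 0 <= T -> T < tau0 ->
  mild p N G0 A a b f g eps d InX tau0 u0 v0 u v ->
  regular_pair p N G0 u v T (Rabs a + Rabs b) /\
  exists del, 0 < del /\ forall s, 0 <= s <= T -> forall x, inK p N G0 x ->
     a + del <= u s x <= b - del /\ a + del <= v s x <= b - del.
Proof.
  intros Hp HX HT HTt [Hm [HcU [HcV _]]].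
  split.
  - split. pose proof (Rabs_pos a); pose proof (Rabs_pos b); lra. split; [|split; [|split]].
    + intros s Hs. destruct (Hm s ltac:(lra)) as [H1 [H2 _]]. split; apply inXinf_unif_cont; auto.
    + intros s Hs x Hx. destruct (Hm s ltac:(lra)) as [_ [_ [H3 H4]]].
      destruct (H3 x Hx). destruct (H4 x Hx). split; unfold Rabs; repeat destruct Rcase_abs; lra.
    + eapply contS_time_equicont; eauto.
    + eapply contS_time_equicont; eauto.
  - destruct (time_margin p N G0 tau0 u T a b Hp HT HTt HcU) as [d1 [Hd1 H1]].
    { intros s Hs. destruct (Hm s ltac:(lra)) as [A1 [_ [A3 _]]]. auto. }
    destruct (time_margin p N G0 tau0 v T a b Hp HT HTt HcV) as [d2 [Hd2 H2]].
    { intros s Hs. destruct (Hm s ltac:(lra)) as [_ [A2 [_ A4]]]. auto. }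
    exists (Rmin d1 d2). split. apply Rmin_glb_lt; auto.
    intros s Hs x Hx. pose proof (Rmin_l d1 d2). pose proof (Rmin_r d1 d2).
    destruct (H1 s Hs x Hx). destruct (H2 s Hs x Hx). lra.
Qed.

Lemma mild_solves_on p N G0 A a b f g eps d InX tau0 u0 v0 u v T :
  T < tau0 -> mild p N G0 A a b f g eps d InX tau0 u0 v0 u v ->
  solves_on p N G0 A eps d f g u0 v0 u v T.
Proof. intros HT [_ [_ [_ Heq]]] t Ht x Hx. apply Heq; auto. lra. Qed.

Lemma time_equicont_contS p N G0 U T : time_equicont p N G0 U T -> contS p N G0 T U.
Proof.
  intros H t Ht e He. destruct (H (e / 2)) as [dl [Hdl Hd]]; [lra|]. exists dl. split; auto.
  intros s Hs Hst x Hx. assert (Rabs (U s x - U t x) <= e / 2) by (apply Hd; auto; lra). lra.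
Qed.

Lemma solves_on_mild p N G0 A rep a b f g eps d M u0 v0 U V T B :
  (p <> 0)%nat -> reps_ok p N G0 rep -> (N <= M)%nat ->
  regular_pair p N G0 U V T B -> (forall t, locconst p N G0 M (U t) /\ locconst p N G0 M (V t)) ->
  (forall s, 0 <= s <= T -> forall x, inK p N G0 x -> a < U s x < b /\ a < V s x < b) ->
  solves_on p N G0 A eps d f g u0 v0 U V T ->
  mild p N G0 A a b f g eps d (inXM p N G0 rep M) T u0 v0 U V.
Proof.
  intros Hp HR HM [_ [_ [_ [HTU HTV]]]] HLC Hbox Hfix. split; [|split; [|split]].
  - intros t Ht. split; [|split; [|split]].
    + apply locconst_inXM; auto. apply HLC.
    + apply locconst_inXM; auto. apply HLC.
    + intros x Hx. apply (Hbox t ltac:(lra) x Hx).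
    + intros x Hx. apply (Hbox t ltac:(lra) x Hx).
  - apply time_equicont_contS; auto.
  - apply time_equicont_contS; auto.
  - intros t Ht x Hx. apply (Hfix t ltac:(lra) x Hx).
Qed.

Lemma lipschitz_weaken F L L' : lipschitz F L -> L <= L' -> lipschitz F L'.
Proof.
  intros H HL a b a' b'. eapply Rle_trans. apply H. apply Rmult_le_compat_r; auto.
  pose proof (Rabs_pos (a - a')). pose proof (Rabs_pos (b - b')). lra.
Qed.

Lemma clamped_lipschitz_pair a b f g al be : C1_grad_nz a b f -> C1_grad_nz a b g ->
  a < al -> al <= be -> be < b ->
  exists L, 0 <= L /\ lipschitz (clamped f al be) L /\ lipschitz (clamped g al be) L.
Proof.
  intros Hf Hg Ha Hab Hb.
  destruct (C1_lipschitz a b f al be Hf Ha Hab Hb) as [Lf [HLf Hlf]].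
  destruct (C1_lipschitz a b g al be Hg Ha Hab Hb) as [Lg [HLg Hlg]].
  exists (Lf + Lg). split; [lra|]. split.
  - apply (lipschitz_weaken _ Lf); [apply clamped_lipschitz; auto|lra].
  - apply (lipschitz_weaken _ Lg); [apply clamped_lipschitz; auto|lra].
Qed.

Lemma prime_neq0 p : prime (Z.of_nat p) -> (p <> 0)%nat.
Proof. intros H. apply prime_ge_2 in H. lia. Qed.

Lemma stability_const_nonneg p N G0 eps d T L : 0 < eps -> 0 < d -> 0 <= T -> 0 <= stability_const p N G0 eps d T L.
Proof.
  intros. unfold stability_const. assert (1 <= growth_uv p N G0 eps d T) by (unfold growth_uv; apply growth_ge1; nra).
  pose proof (exp_pos (weight_rate p N G0 eps d T L * T)). nra.
Qed.


(* Uniqueness: a mild solution on [0,tau1) coincides on [0,tau] with any regular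
   fixed point with the same data that stays inside (a,b) with a margin.  Both lie
   in a common compact box, where f and g may be clamped to Lipschitz functions, and
   the stability estimate with zero initial discrepancy forces equality. *)
Lemma mild_solutions_agree p N G0 A a b f g eps d InX tau tau1 w z u v U V B dbox :
  (p <> 0)%nat -> adj01 G0 A -> C1_grad_nz a b f -> C1_grad_nz a b g -> 0 < eps -> 0 < d ->
  (forall phi, InX phi -> inXinf p N G0 phi) -> 0 <= tau -> tau < tau1 ->
  mild p N G0 A a b f g eps d InX tau1 w z u v ->
  unif_cont p N G0 w -> unif_cont p N G0 z -> regular_pair p N G0 U V tau B -> 0 < dbox ->
  (forall s, 0 <= s <= tau -> forall y, inK p N G0 y ->
     a + dbox <= U s y <= b - dbox /\ a + dbox <= V s y <= b - dbox) ->
  solves_on p N G0 A eps d f g w z U V tau ->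
  forall t, 0 <= t <= tau -> forall x, inK p N G0 x -> u t x = U t x /\ v t x = V t x.
Proof.
  intros Hp HA Hf Hg He Hd HX Htau Htau1 Hm Hw Hz HPG Hdbox Hbox Hfix t Ht x Hx.
  destruct (mild_solution_regular p N G0 A a b f g eps d InX tau1 w z u v tau Hp HX Htau Htau1 Hm)
    as [HPGu [du [Hdu Hbu]]].
  set (d3 := Rmin du dbox). assert (Hd3 : 0 < d3) by (apply Rmin_glb_lt; lra).
  assert (Hd31 : d3 <= du) by apply Rmin_l. assert (Hd32 : d3 <= dbox) by apply Rmin_r.
  assert (Hab : a + d3 <= b - d3).
  { destruct (Hbox t Ht x Hx) as [[? ?] _]. lra. }
  destruct (clamped_lipschitz_pair a b f g (a + d3) (b - d3) Hf Hg ltac:(lra) Hab ltac:(lra))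
    as [L [HL [HF HG]]].
  assert (Hu_cl : solves_on p N G0 A eps d (clamped f (a + d3) (b - d3)) (clamped g (a + d3) (b - d3)) w z u v tau).
  { apply (solves_on_change p N G0 A eps d f g); auto; [|eapply mild_solves_on; eauto].
    intros s Hs y Hy. destruct (Hbu s Hs y Hy). split; rewrite clamped_id; auto; lra. }
  assert (HU_cl : solves_on p N G0 A eps d (clamped f (a + d3) (b - d3)) (clamped g (a + d3) (b - d3)) w z U V tau).
  { apply (solves_on_change p N G0 A eps d f g); auto.
    intros s Hs y Hy. destruct (Hbox s Hs y Hy). split; rewrite clamped_id; auto; lra. }
  assert (Hq := mild_map_stability p N G0 A eps d _ _ L tau u v U V _ _ w w z z 0
    Hp HA He Hd Htau HL HF HG HPGu HPG Hw Hw Hz Hz (Rle_refl 0)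
    ltac:(intros; rewrite !Rminus_diag, Rabs_R0; lra) Hu_cl HU_cl t Ht x Hx).
  rewrite Rmult_0_r in Hq.
  pose proof (Rabs_pos (u t x - U t x)). pose proof (Rabs_pos (v t x - V t x)).
  split; apply Rminus_diag_uniq, abs_le0; lra.
Qed.

Lemma discrete_solution_close p N G0 A rep eps d F Gf L T M u0 v0 u v Bu a0 :
  (p <> 0)%nat -> adj01 G0 A -> reps_ok p N G0 rep -> 0 < eps -> 0 < d -> 0 <= T -> 0 <= L ->
  lipschitz F L -> lipschitz Gf L -> (N <= M)%nat ->
  unif_cont p N G0 u0 -> unif_cont p N G0 v0 -> regular_pair p N G0 u v T Bu ->
  solves_on p N G0 A eps d F Gf u0 v0 u v T -> 0 <= a0 ->
  (forall y, inK p N G0 y -> Rabs (PM p N G0 rep M u0 y - u0 y) <= a0 /\ Rabs (PM p N G0 rep M v0 y - v0 y) <= a0) ->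
  exists U V B, regular_pair p N G0 U V T B /\ (forall t, locconst p N G0 M (U t) /\ locconst p N G0 M (V t)) /\
    solves_on p N G0 A eps d F Gf (PM p N G0 rep M u0) (PM p N G0 rep M v0) U V T /\
    (forall t, 0 <= t <= T -> forall x, inK p N G0 x ->
      Rabs (U t x - u t x) + Rabs (V t x - v t x) <= stability_const p N G0 eps d T L * a0).
Proof.
  intros Hp HA HR He Hd HT HL HF HG HM Hu0 Hv0 HPG Hfix Ha0 Hclose.
  destruct (picard_fixed_point p N G0 A eps d F Gf L T M (PM p N G0 rep M u0) (PM p N G0 rep M v0)
    Hp HA He Hd HT HL HF HG HM (PM_locconst p N G0 rep M u0 Hp HR HM) (PM_locconst p N G0 rep M v0 Hp HR HM))
    as [U [V [B [HPGU [HLC Hfx]]]]].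
  exists U, V, B. split; [auto|]. split; [auto|]. split; [auto|].
  apply (mild_map_stability p N G0 A eps d F Gf L T U V u v B Bu
    (PM p N G0 rep M u0) u0 (PM p N G0 rep M v0) v0 a0); auto.
  - apply (locconst_unif_cont p N G0 M); auto. apply PM_locconst; auto.
  - apply (locconst_unif_cont p N G0 M); auto. apply PM_locconst; auto.
Qed.

(* The solution of the clamped problem is close to (u, v), hence stays where the
   clamping is invisible, hence solves the original problem. *)
Lemma discrete_approximation p N G0 A rep a b f g eps d u0 v0 u v T tau0 :
  (p <> 0)%nat -> adj01 G0 A -> reps_ok p N G0 rep -> a < b -> C1_grad_nz a b f -> C1_grad_nz a b g ->
  0 < eps -> 0 < d -> inXinf p N G0 u0 -> inXinf p N G0 v0 -> 0 <= T -> T < tau0 ->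
  mild p N G0 A a b f g eps d (inXinf p N G0) tau0 u0 v0 u v ->
  exists dl, 0 < dl /\ forall e, 0 < e -> exists M0, (N <= M0)%nat /\ forall M, (M0 <= M)%nat ->
    exists U V B, regular_pair p N G0 U V T B /\
      (forall t, locconst p N G0 M (U t) /\ locconst p N G0 M (V t)) /\
      solves_on p N G0 A eps d f g (PM p N G0 rep M u0) (PM p N G0 rep M v0) U V T /\
      (forall s, 0 <= s <= T -> forall y, inK p N G0 y -> a + dl <= U s y <= b - dl /\ a + dl <= V s y <= b - dl) /\
      (forall t, 0 <= t <= T -> forall x, inK p N G0 x -> Rabs (U t x - u t x) <= e /\ Rabs (V t x - v t x) <= e).
Proof.
  intros Hp HA HR Hab Hf Hg He Hd Hu0 Hv0 HT HTt Hmild.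
  destruct (mild_solution_regular p N G0 A a b f g eps d (inXinf p N G0) tau0 u0 v0 u v T Hp (fun phi H => H) HT HTt Hmild)
    as [PGu [du [Hdu Hbu]]].
  set (dl := Rmin du ((b - a) / 4)).
  assert (Hdl : 0 < dl) by (apply Rmin_glb_lt; lra).
  assert (Hdl1 : dl <= du) by apply Rmin_l. assert (Hdl4 : dl <= (b - a) / 4) by apply Rmin_r.
  destruct (clamped_lipschitz_pair a b f g (a + dl / 2) (b - dl / 2) Hf Hg ltac:(lra) ltac:(lra) ltac:(lra))
    as [L [HL [HF HG]]].
  assert (Hfix : solves_on p N G0 A eps d (clamped f (a + dl / 2) (b - dl / 2)) (clamped g (a + dl / 2) (b - dl / 2)) u0 v0 u v T).
  { apply (solves_on_change p N G0 A eps d f g); auto; [|eapply mild_solves_on; eauto].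
    intros s Hs y Hy. destruct (Hbu s Hs y Hy). split; rewrite clamped_id; auto; lra. }
  set (K := stability_const p N G0 eps d T L). assert (HK : 0 <= K) by (apply stability_const_nonneg; lra).
  exists (dl / 2). split; [lra|]. intros e Hee.
  set (e0 := Rmin (dl / 4 / (K + 1)) (e / (K + 1))).
  assert (He0 : 0 < e0) by (apply Rmin_glb_lt; apply Rdiv_lt_0_compat; lra).
  assert (HKe0 : forall c, 0 < c -> e0 <= c / (K + 1) -> K * e0 <= c).
  { intros c Hc Hle. apply Rle_trans with (c / (K + 1) * K); [|apply scale_le; auto].
    rewrite (Rmult_comm (c / (K + 1))). apply Rmult_le_compat_l; auto. }
  assert (HKdl : K * e0 <= dl / 4) by (apply HKe0; [lra|apply Rmin_l]).
  assert (HKe : K * e0 <= e) by (apply HKe0; [lra|apply Rmin_r]).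
  destruct (PM_close p N G0 rep u0 e0 Hp HR (inXinf_unif_cont p N G0 u0 Hp Hu0) He0) as [M1 [HM1 H1]].
  destruct (PM_close p N G0 rep v0 e0 Hp HR (inXinf_unif_cont p N G0 v0 Hp Hv0) He0) as [M2 [HM2 H2]].
  exists (Nat.max M1 M2). split; [lia|]. intros M HM.
  destruct (discrete_solution_close p N G0 A rep eps d _ _ L T M u0 v0 u v _ e0 Hp HA HR He Hd HT HL HF HG
    ltac:(lia) (inXinf_unif_cont p N G0 u0 Hp Hu0) (inXinf_unif_cont p N G0 v0 Hp Hv0) PGu Hfix ltac:(lra)
    ltac:(intros y Hy; split; [apply H1|apply H2]; auto; lia)) as [U [V [B [HPG [HLC [Hfx Hcl]]]]]].
  (* each component moved by at most K e0 <= dl / 4 *)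
  assert (Hmove : forall t, 0 <= t <= T -> forall x, inK p N G0 x ->
    Rabs (U t x - u t x) <= K * e0 /\ Rabs (V t x - v t x) <= K * e0).
  { intros t Ht x Hx. assert (H := Hcl t Ht x Hx). fold K in H.
    pose proof (Rabs_pos (U t x - u t x)). pose proof (Rabs_pos (V t x - v t x)). split; lra. }
  assert (Hbox : forall s, 0 <= s <= T -> forall y, inK p N G0 y ->
    a + dl / 2 <= U s y <= b - dl / 2 /\ a + dl / 2 <= V s y <= b - dl / 2).
  { intros s Hs y Hy. destruct (Hmove s Hs y Hy) as [Q1 Q2]. destruct (Hbu s Hs y Hy).
    apply Rabs_le_inv in Q1. apply Rabs_le_inv in Q2. lra. }
  exists U, V, B. split; [auto|]. split; [auto|]. split; [|split; [auto|]].
  - apply (solves_on_change p N G0 A eps d (clamped f (a + dl / 2) (b - dl / 2)) (clamped g (a + dl / 2) (b - dl / 2))); auto.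
    intros s Hs y Hy. destruct (Hbox s Hs y Hy). split; apply clamped_id; auto.
  - intros t Ht x Hx. destruct (Hmove t Ht x Hx). split; lra.
Qed.

Theorem theorem3 (p N : nat) (G0 : list nat) (A : nat -> nat -> R)
  (rep : nat -> nat -> digseq) (a b : R) (f g : R -> R -> R) (eps d : R)
  (u0 v0 : digseq -> R) (tau tau0 : R) (u v : R -> digseq -> R) :
  prime (Z.of_nat p) -> (1 <= N)%nat ->
  G0 <> nil -> NoDup G0 -> (forall I, In I G0 -> (I < p ^ N)%nat) ->
  (forall J K, In J G0 -> In K G0 -> A J K = 0 \/ A J K = 1) ->
  (forall M c, (N <= M)%nat -> (c < p ^ M)%nat ->
     inG0b G0 (trunc p N (digits p c)) = true ->
     valid p (rep M c) /\ trunc p M (rep M c) = c) ->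
  a < b -> C1_grad_nz a b f -> C1_grad_nz a b g ->
  0 < eps -> 0 < d ->
  inXinf p N G0 u0 -> inU p N G0 a b u0 ->
  inXinf p N G0 v0 -> inU p N G0 a b v0 ->
  0 < tau -> tau < tau0 ->
  mild p N G0 A a b f g eps d (inXinf p N G0) tau0 u0 v0 u v ->
  (exists M0 : nat, (N <= M0)%nat /\ forall M : nat, (M0 <= M)%nat ->
     exists tau1 uM vM, tau < tau1 /\
       mild p N G0 A a b f g eps d (inXM p N G0 rep M) tau1
            (PM p N G0 rep M u0) (PM p N G0 rep M v0) uM vM) /\
  (forall e, 0 < e -> exists M1 : nat, (N <= M1)%nat /\ forall M : nat, (M1 <= M)%nat ->
     forall tau1 uM vM, tau < tau1 ->
       mild p N G0 A a b f g eps d (inXM p N G0 rep M) tau1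
            (PM p N G0 rep M u0) (PM p N G0 rep M v0) uM vM ->
       forall t, 0 <= t <= tau -> forall x, inK p N G0 x ->
         Rabs (uM t x - u t x) <= e /\ Rabs (vM t x - v t x) <= e).
Proof.
  intros Hprime _ _ _ _ HA HR Hab Hf Hg Heps Hd Hu0X _ Hv0X _ Htau Htt Hmild.
  assert (Hp : (p <> 0)%nat) by (apply prime_neq0; auto).
  set (T := (tau + tau0) / 2).
  destruct (discrete_approximation p N G0 A rep a b f g eps d u0 v0 u v T tau0 Hp HA HR Hab Hf Hg Heps Hd
    Hu0X Hv0X ltac:(unfold T; lra) ltac:(unfold T; lra) Hmild) as [dl [Hdl Happrox]].
  split.
  - (* existence: the approximate solutions are mild solutions on X_M on [0,T), T > tau *)
    destruct (Happrox 1 Rlt_0_1) as [M0 [HM0 HM0']]. exists M0. split; auto. intros M HM.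
    destruct (HM0' M HM) as [U [V [B [HPG [HLC [Hfx [Hbox _]]]]]]].
    exists T, U, V. split; [unfold T; lra|].
    apply (solves_on_mild p N G0 A rep a b f g eps d M _ _ U V T B); auto; [lia|].
    intros s Hs x Hx. destruct (Hbox s Hs x Hx). split; lra.
  - (* convergence: by uniqueness every mild solution on X_M is the approximate one *)
    intros e He. destruct (Happrox e He) as [M1 [HM1 HM1']]. exists M1. split; auto.
    intros M HM tau1 uM vM Htau1 HmM t Ht x Hx.
    destruct (HM1' M HM) as [U [V [B [HPG [HLC [Hfx [Hbox Hcl]]]]]]].
    assert (HUC : forall phi, unif_cont p N G0 (PM p N G0 rep M phi))
      by (intros; apply (locconst_unif_cont p N G0 M); [lia|apply PM_locconst; auto; lia]).
    destruct (mild_solutions_agree p N G0 A a b f g eps d (inXM p N G0 rep M) tau tau1 _ _ uM vM U V B dl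
      Hp HA Hf Hg Heps Hd (fun phi H => locconst_inXinf p N G0 M phi (inXM_locconst p N G0 rep M phi H))
      ltac:(lra) Htau1 HmM (HUC u0) (HUC v0) (regular_pair_restrict p N G0 U V T tau B ltac:(unfold T; lra) HPG)
      Hdl ltac:(intros s Hs y Hy; apply Hbox; [unfold T in *; lra|exact Hy])
      (solves_on_restrict p N G0 A eps d f g _ _ U V T tau ltac:(unfold T; lra) Hfx) t Ht x Hx) as [-> ->].
    apply Hcl; auto. unfold T; lra.
Qed.
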